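(* Let $(\Omega,\mathbb B(\Omega),\mu,T)$ be a measure-preserving dynamical system where $\Omega$ is an interval in $\mathbb R$ and $T$ is strong-mixing, i.e. $\lim_{n\to\infty}\mu(T^{-n}A\cap B)=\mu(A)\mu(B)$ for all $A,B\in\mathbb B(\Omega)$. Then, with $\mathrm{id}$ the identity map on $\Omega$, $$\lim_{d\to\infty}\big(h^{\mathrm{id}}_{\mu,\triangle}(T,d)-h^{\mathrm{id}}_{\mu,\mathrm{cond}}(T,d)\big)=0.$$
   Context: A measure-preserving dynamical system $(\Omega,\mathbb B(\Omega),\mu,T)$: $\mathbb B(\Omega)$ the Borel $\sigma$-algebra, $\mu$ a probability measure, $T:\Omega\to\Omega$ measurable with $\mu(T^{-1}B)=\mu(B)$. For a finite partition $\mathcal P=\{P_0,\dots,P_l\}$: $H(\mathcal P)=-\sum_P\mu(P)\ln\mu(P)$ ($0\ln0=0$), and $\mathcal P_2$ consists of the sets $P_a\cap T^{-1}(P_b)$. Let $\Pi_d$ be the set of permutations of $\{0,\dots,d\}$; $(x_0,\dots,x_d)$ has ordinal pattern $\pi=(r_0,\dots,r_d)$ if $x_{r_0}\ge\dots\ge x_{r_d}$ and $r_{l-1}>r_l$ whenever $x_{r_{l-1}}=x_{r_l}$. The ordinal partition $\mathcal P^{\mathrm{id}}(d)$ consists of the sets $P_\pi=\{\omega\in\Omega:(T^d\omega,T^{d-1}\omega,\dots,T\omega,\omega)\text{ has ordinal pattern }\pi\}$, $\pi\in\Pi_d$. Sorting entropy: $h^{\mathrm{id}}_{\mu,\triangle}(T,d)=H(\mathcal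 P^{\mathrm{id}}(d+1))-H(\mathcal P^{\mathrm{id}}(d))$. Conditional entropy of ordinal patterns: $h^{\mathrm{id}}_{\mu,\mathrm{cond}}(T,d)=H(\mathcal P^{\mathrm{id}}(d)_2)-H(\mathcal P^{\mathrm{id}}(d))$. *)

From Stdlib Require Import Reals List.
Import ListNotations.
Open Scope R_scope.

Definition is_interval (I : R -> Prop) : Prop :=
  forall x y z, I x -> I z -> x <= y -> y <= z -> I y.

Definition Omega (I : R -> Prop) : Type := { x : R | I x }.

Definition rel_open (I : R -> Prop) (U : Omega I -> Prop) : Prop :=
  forall x, U x -> exists eps, 0 < eps /\
    forall y : Omega I, Rabs (proj1_sig y - proj1_sig x) < eps -> U y.

Definition is_sigma_algebra {X : Type} (F : (X -> Prop) -> Prop) : Prop :=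
  F (fun _ => True) /\
  (forall A, F A -> F (fun x => ~ A x)) /\
  (forall A : nat -> X -> Prop, (forall n, F (A n)) -> F (fun x => exists n, A n x)).

Definition Borel (I : R -> Prop) (A : Omega I -> Prop) : Prop :=
  forall F : (Omega I -> Prop) -> Prop,
    is_sigma_algebra F -> (forall U, rel_open I U -> F U) -> F A.

Definition is_prob_measure {X : Type} (F : (X -> Prop) -> Prop)
  (mu : (X -> Prop) -> R) : Prop :=
  (forall A, F A -> 0 <= mu A) /\
  mu (fun _ => True) = 1 /\
  (forall A : nat -> X -> Prop,
     (forall n, F (A n)) ->
     (forall m n x, m <> n -> A m x -> A n x -> False) ->
     infinite_sum (fun n => mu (A n)) (mu (fun x => exists n, A n x))).

Definition preimage {X : Type} (T : X -> X) (B : X -> Prop) : X -> Prop :=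
  fun x => B (T x).

Definition measurable_map {X : Type} (F : (X -> Prop) -> Prop) (T : X -> X) : Prop :=
  forall B, F B -> F (preimage T B).

Definition measure_preserving {X : Type} (F : (X -> Prop) -> Prop)
  (mu : (X -> Prop) -> R) (T : X -> X) : Prop :=
  forall B, F B -> mu (preimage T B) = mu B.

Fixpoint iterT {X : Type} (n : nat) (T : X -> X) (x : X) : X :=
  match n with O => x | S k => T (iterT k T x) end.

Definition strong_mixing {X : Type} (F : (X -> Prop) -> Prop)
  (mu : (X -> Prop) -> R) (T : X -> X) : Prop :=
  forall A B, F A -> F B ->
    Un_cv (fun n => mu (fun x => A (iterT n T x) /\ B x)) (mu A * mu B).

Fixpoint insert_all (x : nat) (l : list nat) : list (list nat) :=
  match l with
  | [] => [[x]]
  | y :: t => (x :: y :: t) :: map (cons y) (insert_all x t)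
  end.

Fixpoint perms (l : list nat) : list (list nat) :=
  match l with
  | [] => [[]]
  | x :: t => flat_map (insert_all x) (perms t)
  end.

Definition Pi (d : nat) : list (list nat) := perms (seq 0 (S d)).

Definition has_pattern (d : nat) (x : nat -> R) (pi : list nat) : Prop :=
  forall l, (1 <= l <= d)%nat ->
    x (nth (l - 1) pi 0%nat) >= x (nth l pi 0%nat) /\
    (x (nth (l - 1) pi 0%nat) = x (nth l pi 0%nat) ->
       (nth (l - 1) pi 0%nat > nth l pi 0%nat)%nat).

Definition P_pat {X : Type} (val : X -> R) (T : X -> X) (d : nat)
  (pi : list nat) : X -> Prop :=
  fun w => has_pattern d (fun k => val (iterT (d - k) T w)) pi.

Definition eta (p : R) : R := if Req_EM_T p 0 then 0 else - p * ln p.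

Definition Rsum_list (l : list R) : R := fold_right Rplus 0 l.

Definition H_ord {X : Type} (mu : (X -> Prop) -> R) (val : X -> R)
  (T : X -> X) (d : nat) : R :=
  Rsum_list (map (fun pi => eta (mu (P_pat val T d pi))) (Pi d)).

Definition H_ord2 {X : Type} (mu : (X -> Prop) -> R) (val : X -> R)
  (T : X -> X) (d : nat) : R :=
  Rsum_list (flat_map (fun a =>
    map (fun b => eta (mu (fun w => P_pat val T d a w /\ P_pat val T d b (T w))))
      (Pi d)) (Pi d)).

Definition h_sort {X : Type} (mu : (X -> Prop) -> R) (val : X -> R)
  (T : X -> X) (d : nat) : R :=
  H_ord mu val T (S d) - H_ord mu val T d.

Definition h_cond {X : Type} (mu : (X -> Prop) -> R) (val : X -> R)
  (T : X -> X) (d : nat) : R :=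
  H_ord2 mu val T d - H_ord mu val T d.

From Stdlib Require Import ZArith Reals Lra Lia List Permutation Sorting.Sorted.
From Stdlib Require Import Classical FunctionalExtensionality PropExtensionality ProofIrrelevance.
From Stdlib Require Import IndefiniteDescription.
Import ListNotations.
Open Scope R_scope.

(* The pattern of (T^(d+1) w, ..., w) is determined by the patterns of (T^d w, ..., w) and of
   (T^(d+1) w, ..., T w), which make up the cell of w in P(d)_2, together with the order of w and
   T^(d+1) w.  So P(d+1) refines P(d)_2 and cuts each of its cells in at most two pieces, and it
   really cuts a cell only if no T^j w, 1 <= j <= d, lies between w and T^(d+1) w for any w in the
   cell.  Hence h_sort - h_cond = H(P(d+1)) - H(P(d)_2) lies between 0 and ln 2 times the measure
   of the set U_d of such points, and strong mixing forces mu(U_d) -> 0.  If the distribution of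
   the observable has an atom, mixing makes the atom a fixed point of full measure, where all
   values tie.  Otherwise cut the line into m quantile bins of mass 1/m: a point of U_d either has
   w and T^(d+1) w in neighbouring bins, which by mixing has asymptotic measure at most 3/m, or
   its orbit segment misses a whole bin, which by mixing has vanishing measure. *)

Lemma set_ext {X : Type} (A B : X -> Prop) : (forall x, A x <-> B x) -> A = B.
Proof.
  intro H; apply functional_extensionality; intro x.
  apply propositional_extensionality; auto.
Qed.

Lemma mu_ext {X : Type} (mu : (X -> Prop) -> R) (A B : X -> Prop) :
  (forall x, A x <-> B x) -> mu A = mu B.
Proof. intro H; rewrite (set_ext _ _ H); reflexivity. Qed.

Lemma inv_INR_S_pos n : 0 < / INR (S n).
Proof. apply Rinv_0_lt_compat, lt_0_INR; lia. Qed.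

Lemma inv_INR_S_small eps : 0 < eps -> exists n, / INR (S n) < eps.
Proof.
  intro H; destruct (archimed_cor1 eps H) as [N [H1 H2]].
  exists (pred N); replace (S (pred N)) with N by lia; exact H1.
Qed.

Lemma inv_INR_S_decr n : / INR (S (S n)) <= / INR (S n).
Proof. apply Rinv_le_contravar; [apply lt_0_INR; lia | rewrite (S_INR (S n)); lra]. Qed.

Lemma INR_unbounded r : exists n, r < INR n.
Proof. destruct (INR_archimed 1 r ltac:(lra)) as [n Hn]; exists n; lra. Qed.

Lemma rational_between a b : a < b -> exists n (z : Z), a < IZR z / INR (S n) < b.
Proof.
  intro H; destruct (inv_INR_S_small (b - a)) as [n Hn]; [lra |].
  assert (Hp : 0 < INR (S n)) by (apply lt_0_INR; lia).
  exists n, (up (a * INR (S n))); destruct (archimed (a * INR (S n))) as [H1 H2].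
  assert (Hb : b * INR (S n) > a * INR (S n) + 1).
  { assert (Hm : (b - a) * INR (S n) > / INR (S n) * INR (S n)) by (apply Rmult_gt_compat_r; lra).
    rewrite Rinv_l in Hm by lra; nra. }
  split; apply (Rmult_lt_reg_r (INR (S n))); auto;
    unfold Rdiv; rewrite Rmult_assoc, Rinv_l; lra.
Qed.

Lemma Un_cv_ext u v l : (forall n, u n = v n) -> Un_cv u l -> Un_cv v l.
Proof.
  intros E H eps He; destruct (H eps He) as [N HN].
  exists N; intros n Hn; rewrite <- E; auto.
Qed.

Lemma Un_cv_const c : Un_cv (fun _ => c) c.
Proof. intros eps He; exists O; intros; unfold Rdist; rewrite Rminus_diag, Rabs_R0; lra. Qed.

Lemma Un_cv_S u l : Un_cv u l -> Un_cv (fun n => u (S n)) l.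
Proof. intros H eps He; destruct (H eps He) as [N HN]; exists N; intros; apply HN; lia. Qed.

Lemma Un_cv_eventually_0 u N : (forall n, (n >= N)%nat -> u n = 0) -> Un_cv u 0.
Proof.
  intros H eps He; exists N; intros n Hn.
  rewrite H; auto; unfold Rdist; rewrite Rminus_0_r, Rabs_R0; lra.
Qed.

Lemma Un_cv_squeeze_0 u v c : (forall n, 0 <= u n <= c * v n) -> Un_cv v 0 -> Un_cv u 0.
Proof.
  intros Huv Hv eps He.
  destruct (Hv (eps / (Rabs c + 1))) as [N HN]; [apply Rdiv_lt_0_compat; pose proof (Rabs_pos c); lra |].
  exists N; intros n Hn; specialize (HN n Hn); specialize (Huv n).
  unfold Rdist in *; rewrite Rminus_0_r in *; rewrite Rabs_right by lra.
  pose proof (Rabs_pos c); pose proof (Rle_abs c).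
  assert (Hv' : Rabs c * Rabs (v n) <= Rabs c * (eps / (Rabs c + 1)))
    by (apply Rmult_le_compat_l; lra).
  assert (Rabs c * (eps / (Rabs c + 1)) < eps)
    by (apply (Rmult_lt_reg_r (Rabs c + 1)); [lra |]; field_simplify; lra).
  assert (c * v n <= Rabs c * Rabs (v n)) by (rewrite <- Rabs_mult; apply Rle_abs).
  lra.
Qed.

Lemma Un_cv_two_valued u l a : Un_cv u l -> (forall n, u n = 0 \/ u n = a) -> l = 0 \/ l = a.
Proof.
  intros H Hu; apply NNPP; intro N.
  assert (Hp : Rmin (Rabs l) (Rabs (l - a)) > 0)
    by (apply Rmin_glb_lt; apply Rabs_pos_lt; intro; apply N; [left | right]; lra).
  destruct (H _ Hp) as [M HM]; specialize (HM M (le_n _)); unfold Rdist in HM.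
  pose proof (Rmin_l (Rabs l) (Rabs (l - a))); pose proof (Rmin_r (Rabs l) (Rabs (l - a))).
  destruct (Hu M) as [E | E]; rewrite E in HM.
  - rewrite Rminus_0_l, Rabs_Ropp in HM; lra.
  - rewrite Rabs_minus_sym in HM; lra.
Qed.

Lemma infinite_sum_const_0 c l : infinite_sum (fun _ => c) l -> c = 0.
Proof.
  intro H; destruct (Req_dec c 0) as [E | E]; auto.
  assert (Hp : Rabs c / 2 > 0) by (apply Rabs_pos_lt in E; lra).
  destruct (H _ Hp) as [N HN].
  pose proof (HN N (le_n _)) as H1; pose proof (HN (S N) (le_S _ _ (le_n _))) as H2.
  unfold Rdist in *; simpl in H2; set (s := sum_f_R0 (fun _ => c) N) in *.
  destruct (Rcase_abs c); [rewrite (Rabs_left c) in * | rewrite (Rabs_right c) in *]; auto;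
    apply Rabs_def2 in H1; apply Rabs_def2 in H2; lra.
Qed.

Lemma infinite_sum_eventually f l s :
  infinite_sum f l -> (forall n, (n >= 1)%nat -> sum_f_R0 f n = s) -> l = s.
Proof.
  intros H Hs; apply NNPP; intro E.
  assert (Hp : Rabs (l - s) > 0) by (apply Rabs_pos_lt; lra).
  destruct (H _ Hp) as [N HN]; specialize (HN (S N) ltac:(lia)).
  rewrite Hs in HN by lia; unfold Rdist in HN; rewrite Rabs_minus_sym in HN; lra.
Qed.

Lemma Rsum_app l1 l2 : Rsum_list (l1 ++ l2) = Rsum_list l1 + Rsum_list l2.
Proof. unfold Rsum_list; induction l1; simpl; [ring | rewrite IHl1; ring]. Qed.

Lemma Rsum_plus {A} (f g : A -> R) L :
  Rsum_list (map (fun i => f i + g i) L) = Rsum_list (map f L) + Rsum_list (map g L).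
Proof. unfold Rsum_list; induction L; simpl; [ring | rewrite IHL; ring]. Qed.

Lemma Rsum_minus {A} (f g : A -> R) L :
  Rsum_list (map (fun i => f i - g i) L) = Rsum_list (map f L) - Rsum_list (map g L).
Proof. unfold Rsum_list; induction L; simpl; [ring | rewrite IHL; ring]. Qed.

Lemma Rsum_scal {A} (f : A -> R) c L :
  Rsum_list (map (fun i => c * f i) L) = c * Rsum_list (map f L).
Proof. unfold Rsum_list; induction L; simpl; [ring | rewrite IHL; ring]. Qed.

Lemma Rsum_const {A} c (L : list A) : Rsum_list (map (fun _ => c) L) = INR (length L) * c.
Proof.
  unfold Rsum_list; induction L; simpl; [ring |].
  rewrite IHL; destruct (length L); simpl; ring.
Qed.

Lemma Rsum_ext {A} (f g : A -> R) L :
  (forall i, In i L -> f i = g i) -> Rsum_list (map f L) = Rsum_list (map g L).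
Proof. unfold Rsum_list; induction L; simpl; intro H; auto; rewrite H, IHL; auto. Qed.

Lemma Rsum_le {A} (f g : A -> R) L :
  (forall i, In i L -> f i <= g i) -> Rsum_list (map f L) <= Rsum_list (map g L).
Proof.
  unfold Rsum_list; induction L; simpl; intro H; [lra |].
  specialize (IHL ltac:(auto)); specialize (H a ltac:(auto)); lra.
Qed.

Lemma Rsum_nonneg {A} (f : A -> R) L : (forall i, In i L -> 0 <= f i) -> 0 <= Rsum_list (map f L).
Proof.
  intro H; replace 0 with (Rsum_list (map (fun _ => 0) L)).
  - apply Rsum_le; auto.
  - rewrite Rsum_const; ring.
Qed.

Lemma Rsum_zero {A} (f : A -> R) L : (forall i, In i L -> f i = 0) -> Rsum_list (map f L) = 0.
Proof. intro H; rewrite (Rsum_ext f (fun _ => 0)), Rsum_const; auto; ring. Qed.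

Lemma Rsum_swap {A B} (g : A -> B -> R) L1 L2 :
  Rsum_list (map (fun i => Rsum_list (map (g i) L2)) L1) =
  Rsum_list (map (fun j => Rsum_list (map (fun i => g i j) L1)) L2).
Proof.
  induction L1; simpl.
  - symmetry; apply Rsum_zero; reflexivity.
  - unfold Rsum_list at 1; simpl; fold (Rsum_list (map (fun i => Rsum_list (map (g i) L2)) L1)).
    rewrite IHL1, <- Rsum_plus; reflexivity.
Qed.

Lemma Rsum_single {A} (f : A -> R) L i0 :
  NoDup L -> In i0 L -> (forall i, In i L -> i <> i0 -> f i = 0) -> Rsum_list (map f L) = f i0.
Proof.
  intros ND; induction ND as [| a L Ha ND IH]; [simpl; tauto |].
  intros Hi H; unfold Rsum_list; simpl; fold (Rsum_list (map f L)).
  destruct (classic (a = i0)) as [<- | E].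
  - rewrite Rsum_zero; [ring |].
    intros i Hi'; apply H; simpl; auto; intros ->; contradiction.
  - destruct Hi as [Hi | Hi]; [congruence |].
    rewrite IH, H; simpl; auto; [ring |].
    intros i Hi' Hne; apply H; simpl; auto.
Qed.

Lemma Rsum_flat_map_prod {A B} (f : A -> B -> R) (L : list A) (L' : list B) :
  Rsum_list (flat_map (fun a => map (f a) L') L) =
  Rsum_list (map (fun ab => f (fst ab) (snd ab)) (list_prod L L')).
Proof. induction L; simpl; [reflexivity | rewrite map_app, !Rsum_app, IHL, map_map; reflexivity]. Qed.

Lemma Un_cv_Rsum {A} (u : A -> nat -> R) (l : A -> R) L :
  (forall a, In a L -> Un_cv (u a) (l a)) ->
  Un_cv (fun n => Rsum_list (map (fun a => u a n) L)) (Rsum_list (map l L)).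
Proof.
  induction L as [| a L IH]; intro H; [exact (Un_cv_const 0) |].
  apply CV_plus; [apply H; simpl; auto | apply IH; intros; apply H; simpl; auto].
Qed.

Definition measurable_fun {X : Type} (F : (X -> Prop) -> Prop) (g : X -> R) : Prop :=
  forall c, F (fun x => g x < c).

Section SigmaAlgebra.

Context {X : Type} {F : (X -> Prop) -> Prop}.
Hypothesis HF : is_sigma_algebra F.

Lemma sa_full : F (fun _ => True).
Proof. apply HF. Qed.

Lemma sa_compl A : F A -> F (fun x => ~ A x).
Proof. apply HF. Qed.

Lemma sa_exists (A : nat -> X -> Prop) : (forall n, F (A n)) -> F (fun x => exists n, A n x).
Proof. apply HF. Qed.

Lemma sa_ext A B : F A -> (forall x, A x <-> B x) -> F B.
Proof. intros H E; rewrite <- (set_ext _ _ E); auto. Qed.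

Lemma sa_empty : F (fun _ => False).
Proof. apply (sa_ext (fun x => ~ True)); [apply sa_compl, sa_full | tauto]. Qed.

Lemma sa_const (P : Prop) : F (fun _ => P).
Proof.
  destruct (classic P).
  - apply (sa_ext (fun _ => True)); [apply sa_full | tauto].
  - apply (sa_ext (fun _ => False)); [apply sa_empty | tauto].
Qed.

Lemma sa_or A B : F A -> F B -> F (fun x => A x \/ B x).
Proof.
  intros HA HB; apply (sa_ext (fun x => exists n, (match n with O => A | _ => B end) x)).
  - apply sa_exists; intros [| n]; auto.
  - intro x; split; [intros [[| n] H]; auto |].
    intros [H | H]; [exists O | exists 1%nat]; auto.
Qed.

Lemma sa_and A B : F A -> F B -> F (fun x => A x /\ B x).
Proof.
  intros HA HB; apply (sa_ext (fun x => ~ (~ A x \/ ~ B x))); [| intro; tauto].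
  apply sa_compl, sa_or; apply sa_compl; auto.
Qed.

Lemma sa_impl A B : F A -> F B -> F (fun x => A x -> B x).
Proof.
  intros HA HB; apply (sa_ext (fun x => ~ A x \/ B x)); [| intro; tauto].
  apply sa_or; auto; apply sa_compl; auto.
Qed.

Lemma sa_forall (A : nat -> X -> Prop) : (forall n, F (A n)) -> F (fun x => forall n, A n x).
Proof.
  intro HA; apply (sa_ext (fun x => ~ exists n, ~ A n x)).
  - apply sa_compl, sa_exists; intro n; apply sa_compl; auto.
  - intro x; split; [intros H n; apply NNPP; intro; apply H; eauto | intros H [n Hn]; auto].
Qed.

Lemma sa_forall_if (P : nat -> Prop) (A : nat -> X -> Prop) :
  (forall n, F (A n)) -> F (fun x => forall n, P n -> A n x).
Proof. intro HA; apply sa_forall; intro n; apply sa_impl; auto; apply sa_const. Qed.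

Lemma sa_exists_lt (A : nat -> X -> Prop) n :
  (forall i, F (A i)) -> F (fun x => exists i, (i < n)%nat /\ A i x).
Proof. intro HA; apply sa_exists; intro i; apply sa_and; auto; apply sa_const. Qed.

Lemma sa_exists_Z (A : Z -> X -> Prop) : (forall z, F (A z)) -> F (fun x => exists z, A z x).
Proof.
  intro HA; apply (sa_ext (fun x => exists n, A (Z.of_nat n) x \/ A (- Z.of_nat n)%Z x)).
  - apply sa_exists; intro; apply sa_or; auto.
  - intro x; split; [intros [n [H | H]]; eauto |].
    intros [[| p | p] Hz]; [exists O; auto | |];
      exists (Pos.to_nat p); rewrite positive_nat_Z; auto.
Qed.

Lemma sa_preimage_iter (T : X -> X) (J : X -> Prop) n :
  measurable_map F T -> F J -> F (fun w => J (iterT n T w)).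
Proof.
  intros HT; revert J; induction n; intros J HJ; simpl; auto.
  apply (IHn (fun x => J (T x))), HT, HJ.
Qed.

Lemma measurable_fun_const c : measurable_fun F (fun _ => c).
Proof. intro; apply sa_const. Qed.

Lemma measurable_fun_iter (T : X -> X) n g :
  measurable_map F T -> measurable_fun F g -> measurable_fun F (fun x => g (iterT n T x)).
Proof. intros HT Hg c; apply (sa_preimage_iter T (fun x => g x < c)); auto. Qed.

Lemma sa_ge_const g c : measurable_fun F g -> F (fun x => g x >= c).
Proof. intro Hg; apply (sa_ext (fun x => ~ g x < c)); [apply sa_compl, Hg | intro; lra]. Qed.

Lemma sa_gt_const g c : measurable_fun F g -> F (fun x => c < g x).
Proof.
  intro Hg; apply (sa_ext (fun x => exists n, g x >= c + / INR (S n))).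
  - apply sa_exists; intro n; apply sa_ge_const, Hg.
  - intro x; split.
    + intros [n Hn]; pose proof (inv_INR_S_pos n); lra.
    + intro H; destruct (inv_INR_S_small (g x - c)) as [n Hn]; [lra | exists n; lra].
Qed.

Lemma sa_le_const g c : measurable_fun F g -> F (fun x => g x <= c).
Proof. intro Hg; apply (sa_ext (fun x => ~ c < g x)); [apply sa_compl, sa_gt_const, Hg | intro; lra]. Qed.

Lemma sa_lt g h : measurable_fun F g -> measurable_fun F h -> F (fun x => g x < h x).
Proof.
  intros Hg Hh.
  apply (sa_ext (fun x => exists n z, g x < IZR z / INR (S n) /\ IZR z / INR (S n) < h x)).
  - apply sa_exists; intro n; apply sa_exists_Z; intro z; apply sa_and; [apply Hg | apply sa_gt_const, Hh].
  - intro x; split; [intros [n [z Hz]]; lra |].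
    intro H; destruct (rational_between _ _ H) as [n [z Hz]]; exists n, z; lra.
Qed.

Lemma sa_eq g h : measurable_fun F g -> measurable_fun F h -> F (fun x => g x = h x).
Proof.
  intros Hg Hh; apply (sa_ext (fun x => ~ g x < h x /\ ~ h x < g x)); [| intro; lra].
  apply sa_and; apply sa_compl, sa_lt; auto.
Qed.

End SigmaAlgebra.

Section Measure.

Context {X : Type} {F : (X -> Prop) -> Prop} {mu : (X -> Prop) -> R}.
Hypotheses (HF : is_sigma_algebra F) (Hmu : is_prob_measure F mu).

Lemma mu_nonneg A : F A -> 0 <= mu A.
Proof. apply Hmu. Qed.

Lemma mu_full : mu (fun _ => True) = 1.
Proof. apply Hmu. Qed.

Lemma mu_empty : mu (fun _ => False) = 0.
Proof.
  destruct Hmu as [_ [_ Hsum]].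
  specialize (Hsum (fun _ _ => False) (fun _ => sa_empty HF) ltac:(tauto)).
  rewrite (mu_ext mu _ (fun _ => False)) in Hsum by (intro; split; [intros [_ []] | tauto]).
  exact (infinite_sum_const_0 _ _ Hsum).
Qed.

Lemma mu_null A : (forall x, ~ A x) -> mu A = 0.
Proof. intro H; rewrite (mu_ext mu A (fun _ => False)) by firstorder; apply mu_empty. Qed.

Lemma mu_pos_inhabited A : 0 < mu A -> exists x, A x.
Proof. intro H; apply NNPP; intro N; rewrite mu_null in H; [lra | firstorder]. Qed.

Lemma mu_disjoint_or A B : F A -> F B -> (forall x, A x -> B x -> False) ->
  mu (fun x => A x \/ B x) = mu A + mu B.
Proof.
  intros HA HB D; destruct Hmu as [_ [_ Hsum]].
  set (C := fun n : nat => match n with O => A | 1%nat => B | _ => fun _ => False end).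
  assert (HC : forall n, F (C n)) by (intros [| [| n]]; simpl; auto; apply sa_empty, HF).
  assert (HD : forall m n x, m <> n -> C m x -> C n x -> False)
    by (intros [| [| m]] [| [| n]] x Hmn; simpl; try tauto; intros; try (eapply D; eauto); lia).
  specialize (Hsum C HC HD).
  rewrite (mu_ext mu _ (fun x => A x \/ B x)) in Hsum.
  2:{ intro x; split; [intros [[| [| n]] Hn]; simpl in Hn; tauto |].
      intros [H | H]; [exists O | exists 1%nat]; auto. }
  apply (infinite_sum_eventually _ _ _ Hsum); intros n Hn; induction n as [| n IH]; [lia |].
  destruct n; [simpl; unfold C; lra |].
  simpl sum_f_R0 in *; rewrite IH by lia; unfold C; rewrite mu_empty; lra.
Qed.

Lemma mu_split A B : F A -> F B -> mu A = mu (fun x => A x /\ B x) + mu (fun x => A x /\ ~ B x).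
Proof.
  intros HA HB; rewrite <- mu_disjoint_or; [apply mu_ext; intro; tauto | | | tauto];
    apply sa_and; auto; apply sa_compl; auto.
Qed.

Lemma mu_mono A B : F A -> F B -> (forall x, A x -> B x) -> mu A <= mu B.
Proof.
  intros HA HB H; rewrite (mu_split B A), (mu_ext mu (fun x => B x /\ A x) A) by firstorder; auto.
  assert (0 <= mu (fun x => B x /\ ~ A x)) by (apply mu_nonneg, sa_and; auto; apply sa_compl; auto).
  lra.
Qed.

Lemma mu_compl A : F A -> mu (fun x => ~ A x) = 1 - mu A.
Proof.
  intro HA; rewrite <- mu_full, (mu_split (fun _ => True) A); auto; [| apply sa_full; auto].
  rewrite (mu_ext mu (fun x => True /\ A x) A), (mu_ext mu (fun x => True /\ ~ A x) (fun x => ~ A x))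
    by tauto.
  ring.
Qed.

Lemma mu_union_le A B : F A -> F B -> mu (fun x => A x \/ B x) <= mu A + mu B.
Proof.
  intros HA HB; assert (HBA : F (fun x => B x /\ ~ A x)) by (apply sa_and; auto; apply sa_compl; auto).
  rewrite (mu_ext mu _ (fun x => A x \/ (B x /\ ~ A x))), mu_disjoint_or by (auto; intros; tauto).
  assert (mu (fun x => B x /\ ~ A x) <= mu B) by (apply mu_mono; auto; tauto).
  lra.
Qed.

Lemma mu_finite_union_le (A : nat -> X -> Prop) n : (forall i, F (A i)) ->
  mu (fun w => exists i, (i < n)%nat /\ A i w) <= Rsum_list (map (fun i => mu (A i)) (seq 0 n)).
Proof.
  intros HA; induction n.
  - rewrite mu_null; [unfold Rsum_list; simpl; lra | intros x [i [Hi _]]; lia].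
  - rewrite seq_S, map_app, Rsum_app; unfold Rsum_list at 2; simpl fold_right.
    rewrite (mu_ext mu _ (fun w => (exists i, (i < n)%nat /\ A i w) \/ A n w)).
    2:{ intro w; split.
        - intros [i [Hi Hs]]; destruct (Nat.eq_dec i n) as [-> | E]; auto.
          left; exists i; split; auto; lia.
        - intros [[i [Hi Hs]] | Hs]; [exists i | exists n]; split; auto. }
    eapply Rle_trans; [apply mu_union_le; auto; apply sa_exists_lt; auto | lra].
Qed.

Lemma mu_increasing_union (A : nat -> X -> Prop) : (forall n, F (A n)) ->
  (forall n x, A n x -> A (S n) x) -> Un_cv (fun n => mu (A n)) (mu (fun x => exists n, A n x)).
Proof.
  intros HA Hinc; destruct Hmu as [_ [_ Hsum]].
  assert (Hmono : forall m k x, (m <= k)%nat -> A m x -> A k x) by (intros m k x Hmk; induction Hmk; auto).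
  set (D := fun n : nat => match n with O => A O | S k => fun x => A (S k) x /\ ~ A k x end).
  assert (HD : forall n, F (D n)) by (intros [| n]; simpl; auto; apply sa_and; auto; apply sa_compl; auto).
  assert (Hdisj : forall m n x, m <> n -> D m x -> D n x -> False).
  { assert (H : forall m n x, (m < n)%nat -> D m x -> D n x -> False).
    { intros m [| n] x Hmn Hm' Hn'; [lia |]; destruct Hn' as [_ Hn'].
      apply Hn', (Hmono m n); [lia | destruct m; simpl in Hm'; tauto]. }
    intros m n x Hmn; destruct (Nat.lt_gt_cases m n) as [[Hl | Hl] _]; eauto. }
  specialize (Hsum D HD Hdisj).
  rewrite (mu_ext mu _ (fun x => exists n, A n x)) in Hsum.
  2:{ intro x; split.
      - intros [[| n] Hn]; simpl in Hn; [eauto | exists (S n); tauto].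
      - intros [n Hn]; induction n; [exists O; auto |].
        destruct (classic (A n x)); auto; exists (S n); simpl; auto. }
  apply (Un_cv_ext (sum_f_R0 (fun n => mu (D n)))), Hsum.
  induction n; [reflexivity |]; simpl sum_f_R0; rewrite IHn.
  rewrite (mu_split (A (S n)) (A n)), (mu_ext mu (fun x => A (S n) x /\ A n x) (A n)); auto.
  intro x; split; [tauto | intro; split; auto].
Qed.

Lemma mu_decreasing_inter (A : nat -> X -> Prop) : (forall n, F (A n)) ->
  (forall n x, A (S n) x -> A n x) -> Un_cv (fun n => mu (A n)) (mu (fun x => forall n, A n x)).
Proof.
  intros HA Hdec.
  pose proof (mu_increasing_union (fun n x => ~ A n x)
    (fun n => sa_compl HF _ (HA n)) ltac:(intros n x Hx Hy; apply Hx; auto)) as H.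
  rewrite (mu_ext mu _ (fun x => ~ forall n, A n x)), mu_compl in H.
  2: apply sa_forall; auto.
  2:{ intro x; split; [intros [n Hn] Hall; auto |].
      intro Hn; apply NNPP; intro N; apply Hn; intro n; apply NNPP; intro; apply N; eauto. }
  pose proof (CV_minus _ _ _ _ (Un_cv_const 1) H) as H1.
  replace (1 - (1 - mu (fun x => forall n, A n x))) with (mu (fun x => forall n, A n x)) in H1 by ring.
  apply (Un_cv_ext _ _ _ ) with (2 := H1); intro n; simpl; rewrite mu_compl; auto; ring.
Qed.

End Measure.

(** * Entropy of finite partitions *)

Lemma eta_0 : eta 0 = 0.
Proof. unfold eta; destruct (Req_EM_T 0 0); congruence. Qed.

Lemma eta_pos x : 0 < x -> eta x = - x * ln x.
Proof. intro H; unfold eta; destruct (Req_EM_T x 0); [lra | reflexivity]. Qed.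

Lemma eta_subadditive x y : 0 <= x -> 0 <= y -> eta (x + y) <= eta x + eta y.
Proof.
  intros Hx Hy; destruct (Req_dec x 0) as [-> | Ex]; [rewrite eta_0, Rplus_0_l; lra |].
  destruct (Req_dec y 0) as [-> | Ey]; [rewrite eta_0, Rplus_0_r; lra |].
  rewrite !eta_pos by lra.
  assert (ln x <= ln (x + y)) by (apply Rlt_le, ln_increasing; lra).
  assert (ln y <= ln (x + y)) by (apply Rlt_le, ln_increasing; lra).
  nra.
Qed.

Lemma eta_Rsum_le {A} (f : A -> R) L : (forall i, In i L -> 0 <= f i) ->
  eta (Rsum_list (map f L)) <= Rsum_list (map (fun i => eta (f i)) L).
Proof.
  induction L as [| a L IH]; intro H; [unfold Rsum_list; simpl; rewrite eta_0; lra |].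
  unfold Rsum_list; simpl; fold (Rsum_list (map f L)) (Rsum_list (map (fun i => eta (f i)) L)).
  eapply Rle_trans; [apply eta_subadditive; [| apply Rsum_nonneg]; intros; apply H; simpl; auto |].
  specialize (IH ltac:(intros; apply H; simpl; auto)); lra.
Qed.

(* Splitting a mass in two raises the entropy by at most [ln 2] per unit mass:
   apply [ln z <= z - 1] to [z = (x + y) / (2 x)] and to [z = (x + y) / (2 y)]. *)
Lemma eta_split_gap_le x y : 0 <= x -> 0 <= y -> eta x + eta y - eta (x + y) <= (x + y) * ln 2.
Proof.
  intros Hx Hy; pose proof ln_lt_2.
  destruct (Req_dec x 0) as [-> | Ex]; [rewrite eta_0, (Rplus_0_l y); nra |].
  destruct (Req_dec y 0) as [-> | Ey]; [rewrite eta_0, (Rplus_0_r x); nra |].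
  rewrite !eta_pos by lra.
  assert (Hln : forall z, 0 < z -> ln ((x + y) / (2 * z)) <= (x + y) / (2 * z) - 1).
  { intros z Hz; pose proof (exp_ineq1_le (ln ((x + y) / (2 * z)))).
    rewrite exp_ln in H0 by (apply Rdiv_lt_0_compat; lra); lra. }
  assert (A1 := Hln x ltac:(lra)); assert (A2 := Hln y ltac:(lra)).
  unfold Rdiv in A1, A2; rewrite ln_mult, ln_Rinv, ln_mult in A1, A2 by (try apply Rinv_0_lt_compat; lra).
  assert (x * ((x + y) * / (2 * x) - 1) = (x + y) / 2 - x) by (field; lra).
  assert (y * ((x + y) * / (2 * y) - 1) = (x + y) / 2 - y) by (field; lra).
  assert (x * (ln (x + y) + - (ln 2 + ln x)) <= x * ((x + y) * / (2 * x) - 1))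
    by (apply Rmult_le_compat_l; lra).
  assert (y * (ln (x + y) + - (ln 2 + ln y)) <= y * ((x + y) * / (2 * y) - 1))
    by (apply Rmult_le_compat_l; lra).
  nra.
Qed.

Record partition {X I : Type} (F : (X -> Prop) -> Prop) (L : list I) (P : I -> X -> Prop) : Prop := {
  partition_NoDup : NoDup L;
  partition_measurable : forall i, F (P i);
  partition_disjoint : forall i j x, In i L -> In j L -> i <> j -> P i x -> P j x -> False;
  partition_cover : forall x, exists i, In i L /\ P i x }.

Definition entropy {X I : Type} (mu : (X -> Prop) -> R) (L : list I) (P : I -> X -> Prop) : R :=
  Rsum_list (map (fun i => eta (mu (P i))) L).

Section Partition.

Context {X I : Type} {F : (X -> Prop) -> Prop} {mu : (X -> Prop) -> R}.
Hypotheses (HF : is_sigma_algebra F) (Hmu : is_prob_measure F mu).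
Variables (L : list I) (P : I -> X -> Prop).
Hypothesis HP : partition F L P.

Lemma mu_partition_sum E : F E -> Rsum_list (map (fun i => mu (fun x => P i x /\ E x)) L) = mu E.
Proof.
  destruct HP as [ND HPm Hd _].
  assert (Hgen : forall L', NoDup L' -> incl L' L -> forall E, F E ->
            (forall x, E x -> exists i, In i L' /\ P i x) ->
            Rsum_list (map (fun i => mu (fun x => P i x /\ E x)) L') = mu E).
  { intros L' ND'; induction ND' as [| a L' Ha ND' IH]; intros Hincl E' HE' Hc.
    - symmetry; apply (mu_null HF Hmu); intros x Hx; destruct (Hc x Hx) as [i [[] _]].
    - unfold Rsum_list; simpl; fold (Rsum_list (map (fun i => mu (fun x => P i x /\ E' x)) L')).
      assert (HaL : In a L) by (apply Hincl; simpl; auto).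
      rewrite (Rsum_ext _ (fun i => mu (fun x => P i x /\ (E' x /\ ~ P a x)))).
      2:{ intros i Hi; apply mu_ext; intro x; split; [| tauto].
          intros [H1 H2]; repeat split; auto; intro H3.
          apply (Hd i a x); auto; [apply Hincl; simpl; auto | intros ->; tauto]. }
      rewrite IH.
      + rewrite (mu_split HF Hmu E' (P a)) by auto.
        rewrite (mu_ext mu (fun x => P a x /\ E' x) (fun x => E' x /\ P a x)) by (intro; tauto).
        ring.
      + intros i Hi; apply Hincl; simpl; auto.
      + apply sa_and, sa_compl; auto.
      + intros x [Hx Hn]; destruct (Hc x Hx) as [i [[-> | Hi] Hs]]; [tauto | eauto]. }
  intro HE; apply Hgen; auto; [intros i; auto | intros x _; apply HP].
Qed.

(* The hypothesis says that [E] lies inside a single cell. *)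
Lemma Rsum_eta_mu_cells_unsplit E :
  (forall i x y, In i L -> E x -> E y -> P i x -> P i y) ->
  Rsum_list (map (fun i => eta (mu (fun x => P i x /\ E x))) L) = eta (mu E).
Proof.
  destruct HP as [ND _ Hd Hc]; intro Hns.
  destruct (classic (exists x, E x)) as [[x0 Hx0] | N].
  - destruct (Hc x0) as [i0 [Hi0 Hs0]]; rewrite (Rsum_single _ _ i0); auto.
    + f_equal; apply mu_ext; intro x; split; [tauto | intro Hx; split; eauto].
    + intros i Hi Hne; rewrite (mu_null HF Hmu), eta_0; auto.
      intros x [H1 H2]; apply (Hd i i0 x); eauto.
  - rewrite (mu_null HF Hmu E), eta_0 by firstorder; apply Rsum_zero; intros i Hi.
    rewrite (mu_null HF Hmu), eta_0; firstorder.
Qed.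

End Partition.

Section RefinementGap.

Context {X Ip Iq : Type} {F : (X -> Prop) -> Prop} {mu : (X -> Prop) -> R}.
Hypotheses (HF : is_sigma_algebra F) (Hmu : is_prob_measure F mu).
Variables (LP : list Ip) (P : Ip -> X -> Prop) (LQ : list Iq) (Q : Iq -> X -> Prop) (A U : X -> Prop).
Hypotheses (HP : partition F LP P) (HQ : partition F LQ Q) (HA : F A) (HU : F U).
Hypothesis refines : forall p q x y, In p LP -> In q LQ -> P p x -> P p y -> Q q x -> Q q y.
Hypothesis cell_and_A_determine :
  forall p q x y, In p LP -> In q LQ -> Q q x -> Q q y -> (A x <-> A y) -> P p x -> P p y.
Hypothesis split_cells_in_U :
  forall q x y w, In q LQ -> Q q x -> A x -> Q q y -> ~ A y -> Q q w -> U w.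

Let HPm := partition_measurable _ _ _ HP.
Let HQm := partition_measurable _ _ _ HQ.

Lemma entropy_refinement_double_sum :
  entropy mu LP P =
  Rsum_list (map (fun q => Rsum_list (map (fun p => eta (mu (fun w => Q q w /\ P p w))) LP)) LQ).
Proof.
  unfold entropy; rewrite <- (Rsum_swap (fun p q => eta (mu (fun w => Q q w /\ P p w)))).
  apply Rsum_ext; intros p Hp; symmetry.
  apply (Rsum_eta_mu_cells_unsplit HF Hmu LQ Q HQ); intros q x y Hq; eauto.
Qed.

Lemma cell_entropy_gap q : In q LQ ->
  0 <= Rsum_list (map (fun p => eta (mu (fun w => Q q w /\ P p w))) LP) - eta (mu (Q q))
    <= ln 2 * mu (fun w => Q q w /\ U w).
Proof.
  intro Hq; set (S := Rsum_list (map (fun p => eta (mu (fun w => Q q w /\ P p w))) LP)).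
  assert (HQA : F (fun w => Q q w /\ A w)) by (apply sa_and; auto).
  assert (HQnA : F (fun w => Q q w /\ ~ A w)) by (apply sa_and, sa_compl; auto).
  assert (HQU : F (fun w => Q q w /\ U w)) by (apply sa_and; auto).
  assert (Hcells : S = Rsum_list (map (fun p => eta (mu (fun w => P p w /\ Q q w))) LP))
    by (apply Rsum_ext; intros; f_equal; apply mu_ext; intro; tauto).
  split.
  - rewrite <- (mu_partition_sum HF Hmu LP P HP (Q q)), Hcells by auto.
    pose proof (eta_Rsum_le (fun p => mu (fun w => P p w /\ Q q w)) LP) as Hs.
    assert (forall p, In p LP -> 0 <= mu (fun w => P p w /\ Q q w))
      by (intros; apply (mu_nonneg Hmu), sa_and; auto).
    specialize (Hs ltac:(auto)); lra.
  - set (al := mu (fun w => Q q w /\ A w)); set (be := mu (fun w => Q q w /\ ~ A w)).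
    assert (Hal : 0 <= al) by (apply (mu_nonneg Hmu); auto).
    assert (Hbe : 0 <= be) by (apply (mu_nonneg Hmu); auto).
    assert (EQ : mu (Q q) = al + be) by (apply (mu_split HF Hmu); auto).
    assert (Hhalf : forall B, F B -> (forall x y, B x -> B y -> A x <-> A y) ->
              Rsum_list (map (fun p => eta (mu (fun w => P p w /\ (Q q w /\ B w)))) LP)
              = eta (mu (fun w => Q q w /\ B w))).
    { intros B HB HAB; apply (Rsum_eta_mu_cells_unsplit HF Hmu LP P HP).
      intros p x y Hp [Hx1 Hx2] [Hy1 Hy2]; apply (cell_and_A_determine p q); auto. }
    assert (HS : S <= eta al + eta be).
    { unfold al, be; rewrite <- (Hhalf A), <- (Hhalf (fun w => ~ A w)), <- Rsum_plus;
        [| apply sa_compl; auto | intros; tauto | auto | intros; tauto].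
      apply Rsum_le; intros p Hp.
      rewrite (mu_split HF Hmu (fun w => Q q w /\ P p w) A) by (try apply sa_and; auto).
      rewrite (mu_ext mu (fun w => (Q q w /\ P p w) /\ A w) (fun w => P p w /\ (Q q w /\ A w))),
        (mu_ext mu (fun w => (Q q w /\ P p w) /\ ~ A w) (fun w => P p w /\ (Q q w /\ ~ A w)))
        by (intro; tauto).
      apply eta_subadditive; apply (mu_nonneg Hmu); apply sa_and; auto. }
    pose proof (eta_split_gap_le al be Hal Hbe).
    assert (0 <= ln 2 * mu (fun w => Q q w /\ U w))
      by (apply Rmult_le_pos; [pose proof ln_lt_2; lra | apply (mu_nonneg Hmu); auto]).
    destruct (Req_dec al 0) as [E0 | E0];
      [rewrite E0, eta_0 in *; rewrite EQ, (Rplus_0_l be); lra |].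
    destruct (Req_dec be 0) as [E1 | E1];
      [rewrite E1, eta_0 in *; rewrite EQ, (Rplus_0_r al); lra |].
    destruct (mu_pos_inhabited HF Hmu (fun w => Q q w /\ A w)) as [x [Qx Ax]];
      [destruct Hal; [auto | congruence] |].
    destruct (mu_pos_inhabited HF Hmu (fun w => Q q w /\ ~ A w)) as [y [Qy Ay]];
      [destruct Hbe; [auto | congruence] |].
    assert (EU : mu (fun w => Q q w /\ U w) = mu (Q q))
      by (apply mu_ext; intro w; split; [tauto | intro Hw; split; eauto]).
    rewrite EU, EQ; nra.
Qed.

Lemma entropy_refinement_gap : 0 <= entropy mu LP P - entropy mu LQ Q <= ln 2 * mu U.
Proof.
  rewrite entropy_refinement_double_sum; unfold entropy; rewrite <- !Rsum_minus.
  rewrite <- (mu_partition_sum HF Hmu LQ Q HQ U HU), <- Rsum_scal.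
  split; [apply Rsum_nonneg | apply Rsum_le]; intros q Hq; apply (cell_entropy_gap q Hq).
Qed.

End RefinementGap.

(** * Ordinal patterns *)

Definition above (x : nat -> R) (i j : nat) : Prop := x i > x j \/ (x i = x j /\ (i > j)%nat).

Lemma above_irrefl x i : ~ above x i i.
Proof. intros [H | [_ H]]; [lra | lia]. Qed.

Lemma above_trans x i j k : above x i j -> above x j k -> above x i k.
Proof. unfold above; intros [H1 | [H1 H1']] [H2 | [H2 H2']]; [left; lra .. | right; split; [lra | lia]]. Qed.

Lemma above_asym x i j : above x i j -> above x j i -> False.
Proof. intros H1 H2; apply (above_irrefl x i); eapply above_trans; eauto. Qed.

Lemma above_total x i j : i <> j -> above x i j \/ above x j i.
Proof.
  intro H; unfold above.
  destruct (Rtotal_order (x i) (x j)) as [E | [E | E]]; [right; left; lra | | left; left; lra].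
  destruct (proj1 (Nat.lt_gt_cases i j) H); [right | left]; right; split; auto; lia.
Qed.

Lemma above_Transitive x : Relations_1.Transitive (above x).
Proof. intros i j k; apply above_trans. Qed.

Lemma above_shift x i j : above (fun k => x (S k)) i j <-> above x (S i) (S j).
Proof. unfold above; split; (intros [H | [H1 H2]]; [left; auto | right; split; auto; lia]). Qed.

Lemma has_pattern_iff_above d x pi :
  has_pattern d x pi <-> forall l, (1 <= l <= d)%nat -> above x (nth (l - 1) pi 0%nat) (nth l pi 0%nat).
Proof.
  unfold has_pattern, above; split; intros H l Hl; specialize (H l Hl).
  - destruct H as [H1 H2]; destruct (Req_dec (x (nth (l - 1) pi 0%nat)) (x (nth l pi 0%nat))); auto.
    left; lra.
  - destruct H as [H | [H1 H2]]; split; auto; [lra | intro; lra | lra].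
Qed.

Lemma insert_all_Permutation a t p : In p (insert_all a t) -> Permutation p (a :: t).
Proof.
  revert p; induction t as [| b t IH]; simpl; intros p Hp; [destruct Hp as [<- | []]; auto |].
  destruct Hp as [<- | Hp]; auto.
  apply in_map_iff in Hp; destruct Hp as [q [<- Hq]].
  eapply perm_trans; [apply perm_skip, IH, Hq | apply perm_swap].
Qed.

Lemma insert_all_In a l1 l2 : In (l1 ++ a :: l2) (insert_all a (l1 ++ l2)).
Proof. induction l1 as [| b l1 IH]; simpl; [destruct l2; simpl; auto | right; apply in_map; auto]. Qed.

Lemma insert_all_split a t p : In p (insert_all a t) -> exists l1 l2, p = l1 ++ a :: l2 /\ t = l1 ++ l2.
Proof.
  revert p; induction t as [| b t IH]; simpl; intros p Hp.
  - destruct Hp as [<- | []]; exists [], []; auto.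
  - destruct Hp as [<- | Hp]; [exists [], (b :: t); auto |].
    apply in_map_iff in Hp; destruct Hp as [q [<- Hq]]; destruct (IH q Hq) as [l1 [l2 [-> ->]]].
    exists (b :: l1), l2; auto.
Qed.

Lemma NoDup_insert_all a t : ~ In a t -> NoDup (insert_all a t).
Proof.
  induction t as [| b t IH]; simpl; intro H; [repeat constructor; auto |].
  constructor.
  - intro Hin; apply in_map_iff in Hin; destruct Hin as [q [E _]]; injection E; intros; subst; tauto.
  - apply FinFun.Injective_map_NoDup; [intros u v E; injection E; auto | apply IH; tauto].
Qed.

Lemma perms_Permutation l p : In p (perms l) -> Permutation p l.
Proof.
  revert p; induction l as [| a t IH]; simpl; intros p Hp; [destruct Hp as [<- | []]; auto |].
  apply in_flat_map in Hp; destruct Hp as [q [Hq Hp]].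
  eapply perm_trans; [apply insert_all_Permutation, Hp | auto].
Qed.

Lemma Permutation_perms l p : Permutation p l -> In p (perms l).
Proof.
  revert p; induction l as [| a t IH]; intros p Hp.
  - apply Permutation_sym, Permutation_nil in Hp; subst; simpl; auto.
  - destruct (Permutation_vs_cons_inv Hp) as [l1 [l2 ->]].
    assert (Permutation (l1 ++ l2) t).
    { apply (Permutation_cons_inv (a := a)); eapply perm_trans; [apply Permutation_middle | exact Hp]. }
    simpl; apply in_flat_map; exists (l1 ++ l2); split; auto; apply insert_all_In.
Qed.

Lemma NoDup_flat_map {A B} (f : A -> list B) L : NoDup L -> (forall a, In a L -> NoDup (f a)) ->
  (forall a b p, In a L -> In b L -> a <> b -> In p (f a) -> In p (f b) -> False) -> NoDup (flat_map f L).
Proof.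
  induction 1 as [| a L Ha ND IH]; simpl; intros H1 H2; [constructor |].
  apply NoDup_app; auto; [apply IH; auto; intros; eapply H2; eauto |].
  intros p Hp Hp'; apply in_flat_map in Hp'; destruct Hp' as [b [Hb Hp']].
  apply (H2 a b p); auto; intros ->; auto.
Qed.

Lemma NoDup_list_prod {A B} (l : list A) (l' : list B) : NoDup l -> NoDup l' -> NoDup (list_prod l l').
Proof.
  induction 1 as [| a l Ha ND IH]; intro H'; simpl; [constructor |].
  apply NoDup_app; auto; [apply FinFun.Injective_map_NoDup; auto; intros u v E; injection E; auto |].
  intros [x y] Hxy Hxy'; apply in_map_iff in Hxy; destruct Hxy as [b [E _]]; injection E; intros; subst.
  apply in_prod_iff in Hxy'; tauto.
Qed.

Lemma NoDup_perms l : NoDup l -> NoDup (perms l).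
Proof.
  induction 1 as [| a t Ha ND IH]; simpl; [repeat constructor; auto |].
  apply NoDup_flat_map; auto.
  - intros q Hq; apply NoDup_insert_all; intro Hin; apply Ha.
    eapply Permutation_in; [apply perms_Permutation, Hq | exact Hin].
  - intros q1 q2 p Hq1 Hq2 Hne Hp1 Hp2; apply Hne.
    assert (N1 : ~ In a q1) by (intro Hin; apply Ha, (Permutation_in _ (perms_Permutation _ _ Hq1) Hin)).
    assert (N2 : ~ In a q2) by (intro Hin; apply Ha, (Permutation_in _ (perms_Permutation _ _ Hq2) Hin)).
    destruct (insert_all_split _ _ _ Hp1) as [l1 [l2 [E1 ->]]].
    destruct (insert_all_split _ _ _ Hp2) as [m1 [m2 [E3 ->]]].
    assert (Hrem : forall k1 k2, ~ In a (k1 ++ k2) -> remove Nat.eq_dec a (k1 ++ a :: k2) = k1 ++ k2).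
    { intros k1 k2 Hk; rewrite remove_app; simpl; destruct (Nat.eq_dec a a); [| congruence].
      rewrite !notin_remove; auto; intro; apply Hk, in_or_app; auto. }
    rewrite <- (Hrem l1 l2), <- (Hrem m1 m2), <- E1, <- E3; auto.
Qed.

Lemma In_Pi d p : In p (Pi d) <-> Permutation p (seq 0 (S d)).
Proof. split; [apply perms_Permutation | apply Permutation_perms]. Qed.

Lemma Pi_length d p : In p (Pi d) -> length p = S d.
Proof. intro H; apply In_Pi, Permutation_length in H; rewrite H, length_seq; auto. Qed.

Lemma In_Pi_entry d p k : In p (Pi d) -> (In k p <-> (k <= d)%nat).
Proof.
  intro H; apply In_Pi in H; split; intro Hk.
  - apply (Permutation_in _ H), in_seq in Hk; lia.
  - apply (Permutation_in _ (Permutation_sym H)), in_seq; lia.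
Qed.

Lemma Pi_NoDup d : NoDup (Pi d).
Proof. apply NoDup_perms, seq_NoDup. Qed.

Lemma Pi_nth_le d p l : In p (Pi d) -> (l <= d)%nat -> (nth l p 0%nat <= d)%nat.
Proof. intros H Hl; apply (In_Pi_entry d p); auto; apply nth_In; rewrite (Pi_length d p H); lia. Qed.

Lemma Sorted_nth {A} (Rl : A -> A -> Prop) l a0 :
  Sorted Rl l -> forall k, (S k < length l)%nat -> Rl (nth k l a0) (nth (S k) l a0).
Proof.
  induction 1 as [| a t Hs IH Hd]; simpl; intros k Hk; [lia |].
  destruct k; [destruct t as [| b t]; [simpl in Hk; lia | inversion Hd; auto] | apply IH; lia].
Qed.

Lemma nth_Sorted {A} (Rl : A -> A -> Prop) l a0 :
  (forall k, (S k < length l)%nat -> Rl (nth k l a0) (nth (S k) l a0)) -> Sorted Rl l.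
Proof.
  induction l as [| a t IH]; intro H; constructor; [apply IH; intros k Hk; apply (H (S k)); simpl; lia |].
  destruct t as [| b t]; constructor; apply (H O); simpl; lia.
Qed.

Lemma has_pattern_iff_Sorted d x p : length p = S d -> (has_pattern d x p <-> Sorted (above x) p).
Proof.
  intro Hl; rewrite has_pattern_iff_above; split.
  - intro H; apply (nth_Sorted _ _ 0%nat); intros k Hk; specialize (H (S k) ltac:(lia)).
    replace (S k - 1)%nat with k in H by lia; auto.
  - intros H l Hl'; replace l with (S (l - 1)) at 2 by lia; apply Sorted_nth; auto; lia.
Qed.

Lemma Sorted_insert x a l : Sorted (above x) l -> ~ In a l ->
  exists l', Permutation l' (a :: l) /\ Sorted (above x) l'.
Proof.
  induction l as [| b t IH]; intros Hs Ha; [exists [a]; split; auto |].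
  destruct (classic (above x a b)) as [H | H]; [exists (a :: b :: t); split; auto |].
  assert (Hba : above x b a)
    by (destruct (above_total x a b) as [E | E]; [intros ->; simpl in Ha; tauto | tauto | auto]).
  apply Sorted_inv in Hs; destruct Hs as [Hs Hd].
  destruct (IH Hs ltac:(simpl in Ha; tauto)) as [l'' [Hp Hs'']].
  exists (b :: l''); split; [eapply perm_trans; [apply perm_skip, Hp | apply perm_swap] |].
  constructor; auto; destruct l'' as [| c l'']; constructor.
  assert (Hc : In c (a :: t)) by (apply (Permutation_in _ Hp); simpl; auto).
  destruct Hc as [<- | Hc]; auto.
  assert (HS : StronglySorted (above x) (b :: t))
    by (apply Sorted_StronglySorted; [apply above_Transitive | constructor; auto]).
  apply StronglySorted_inv in HS; destruct HS as [_ HF]; rewrite Forall_forall in HF; auto.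
Qed.

Lemma Sorted_Permutation_seq x n : exists l, Permutation l (seq 0 n) /\ Sorted (above x) l.
Proof.
  induction n as [| n IH]; [exists []; split; auto |].
  destruct IH as [l [Hp Hs]]; destruct (Sorted_insert x n l Hs) as [l' [Hp' Hs']].
  - intro Hin; apply (Permutation_in _ Hp), in_seq in Hin; lia.
  - exists l'; split; auto; rewrite seq_S; eapply perm_trans; [exact Hp' |].
    eapply perm_trans; [apply Permutation_cons_append | apply Permutation_app_tail; auto].
Qed.

Lemma pattern_exists d x : exists p, In p (Pi d) /\ has_pattern d x p.
Proof.
  destruct (Sorted_Permutation_seq x (S d)) as [l [Hp Hs]].
  assert (Hl : In l (Pi d)) by (apply In_Pi; auto).
  exists l; split; auto; apply has_pattern_iff_Sorted; auto; apply Pi_length; auto.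
Qed.

Lemma StronglySorted_above_Permutation_eq x l l' :
  StronglySorted (above x) l -> StronglySorted (above x) l' -> Permutation l l' -> l = l'.
Proof.
  revert l'; induction l as [| a t IH]; intros l' H1 H2 Hp; [apply Permutation_nil in Hp; auto |].
  destruct l' as [| b t']; [apply Permutation_sym, Permutation_nil in Hp; discriminate |].
  apply StronglySorted_inv in H1; destruct H1 as [H1 F1].
  apply StronglySorted_inv in H2; destruct H2 as [H2 F2]; rewrite Forall_forall in F1, F2.
  destruct (Nat.eq_dec a b) as [<- | E]; [f_equal; apply IH; auto; eapply Permutation_cons_inv; eauto |].
  exfalso; apply (above_asym x a b).
  - apply F1; destruct (Permutation_in _ (Permutation_sym Hp) (in_eq b t')) as [H | H]; auto; congruence.
  - apply F2; destruct (Permutation_in _ Hp (in_eq a t)) as [H | H]; auto; congruence.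
Qed.

Lemma has_pattern_Sorted d x p : In p (Pi d) -> has_pattern d x p -> StronglySorted (above x) p.
Proof.
  intros Hp H; apply Sorted_StronglySorted; [apply above_Transitive |].
  apply (has_pattern_iff_Sorted d); auto; apply Pi_length; auto.
Qed.

Lemma pattern_unique d x p p' :
  In p (Pi d) -> In p' (Pi d) -> has_pattern d x p -> has_pattern d x p' -> p = p'.
Proof.
  intros Hp Hp' H H'; apply (StronglySorted_above_Permutation_eq x); eauto using has_pattern_Sorted.
  apply In_Pi in Hp; apply In_Pi in Hp'; eapply perm_trans; [exact Hp | apply Permutation_sym, Hp'].
Qed.

Lemma StronglySorted_above_transfer x y l : StronglySorted (above x) l -> StronglySorted (above y) l ->
  forall i j, In i l -> In j l -> above x i j -> above y i j.
Proof.
  induction l as [| a t IH]; intros H1 H2 i j Hi Hj Hr; [destruct Hi |].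
  apply StronglySorted_inv in H1; destruct H1 as [H1 F1].
  apply StronglySorted_inv in H2; destruct H2 as [H2 F2]; rewrite Forall_forall in F1, F2.
  destruct Hi as [<- | Hi]; destruct Hj as [<- | Hj]; auto.
  - exfalso; eapply above_irrefl; eauto.
  - exfalso; apply (above_asym x i a); auto.
Qed.

Lemma has_pattern_above_transfer d x y p : In p (Pi d) -> has_pattern d x p -> has_pattern d y p ->
  forall i j, (i <= d)%nat -> (j <= d)%nat -> above x i j -> above y i j.
Proof.
  intros Hp Hx Hy i j Hi Hj; apply (StronglySorted_above_transfer x y p); eauto using has_pattern_Sorted;
    apply (In_Pi_entry d); auto.
Qed.

Lemma has_pattern_of_above d x y p : In p (Pi d) ->
  (forall i j, (i <= d)%nat -> (j <= d)%nat -> above x i j -> above y i j) ->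
  has_pattern d x p -> has_pattern d y p.
Proof.
  intros Hp H; rewrite !has_pattern_iff_above; intros Hx l Hl.
  apply H; auto; apply Pi_nth_le; auto; lia.
Qed.

Definition orbit_values {X : Type} (val : X -> R) (T : X -> X) (n : nat) (w : X) : nat -> R :=
  fun k => val (iterT (n - k) T w).

Definition pair_cell {X : Type} (val : X -> R) (T : X -> X) (d : nat) (ab : list nat * list nat)
  (w : X) : Prop :=
  P_pat val T d (fst ab) w /\ P_pat val T d (snd ab) (T w).

(* Position [0] of [orbit_values val T (S d) w] holds [T^(d+1) w], position [S d] holds [w]. *)
Definition ends_ordered {X : Type} (val : X -> R) (T : X -> X) (d : nat) (w : X) : Prop :=
  above (orbit_values val T (S d) w) 0 (S d).

Definition between (x : nat -> R) (a b i : nat) : Prop :=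
  (above x a i /\ above x i b) \/ (above x b i /\ above x i a).

Definition ends_adjacent {X : Type} (val : X -> R) (T : X -> X) (d : nat) (w : X) : Prop :=
  forall i, (1 <= i <= d)%nat -> ~ between (orbit_values val T (S d) w) 0 (S d) i.

Lemma iterT_S_r {X : Type} (T : X -> X) n x : iterT n T (T x) = iterT (S n) T x.
Proof. induction n; simpl; [reflexivity | rewrite IHn; reflexivity]. Qed.

Section OrdinalPartition.

Context {X : Type} (val : X -> R) (T : X -> X).

Let P d := P_pat val T d.
Let x d w := orbit_values val T (S d) w.

Lemma pair_cell_snd_iff d b w : In b (Pi d) -> (P d b (T w) <-> has_pattern d (x d w) b).
Proof.
  intro Hb.
  assert (E : forall k, (k <= d)%nat -> val (iterT (d - k) T (T w)) = x d w k)
    by (intros; unfold x, orbit_values; rewrite iterT_S_r; do 3 f_equal; lia).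
  unfold P, P_pat; split; apply has_pattern_of_above; auto; intros i j Hi Hj;
    unfold above; cbv beta; rewrite !E; auto.
Qed.

Lemma pair_cell_fst_iff d a w : P d a w <-> has_pattern d (fun k => x d w (S k)) a.
Proof. reflexivity. Qed.

Lemma pair_cell_above_init d ab w w' : In (snd ab) (Pi d) ->
  pair_cell val T d ab w -> pair_cell val T d ab w' ->
  forall i j, (i <= d)%nat -> (j <= d)%nat -> above (x d w) i j -> above (x d w') i j.
Proof.
  intros Hb [_ H1] [_ H2]; apply (has_pattern_above_transfer d _ _ (snd ab)); auto;
    apply pair_cell_snd_iff; auto.
Qed.

Lemma pair_cell_above_tail d ab w w' : In (fst ab) (Pi d) ->
  pair_cell val T d ab w -> pair_cell val T d ab w' ->
  forall i j, (1 <= i <= S d)%nat -> (1 <= j <= S d)%nat -> above (x d w) i j -> above (x d w') i j.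
Proof.
  intros Ha [H1 _] [H2 _] [| i] [| j] Hi Hj Hr; try lia.
  apply above_shift; apply above_shift in Hr.
  apply (has_pattern_above_transfer d (fun k => x d w (S k)) _ (fst ab)); auto; lia.
Qed.

Lemma pattern_refines_pair_cell d p ab w w' :
  In p (Pi (S d)) -> In (fst ab) (Pi d) -> In (snd ab) (Pi d) ->
  P (S d) p w -> P (S d) p w' -> pair_cell val T d ab w -> pair_cell val T d ab w'.
Proof.
  intros Hp Ha Hb H1 H2 [Q1 Q2].
  pose proof (has_pattern_above_transfer _ _ _ _ Hp H1 H2) as HR; split.
  - apply pair_cell_fst_iff; apply pair_cell_fst_iff in Q1.
    apply (has_pattern_of_above d (fun k => x d w (S k))); auto.
    intros i j Hi Hj Hr; apply above_shift; apply above_shift in Hr; apply HR; auto; lia.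
  - apply pair_cell_snd_iff; auto; apply pair_cell_snd_iff in Q2; auto.
    apply (has_pattern_of_above d (x d w)); auto; intros i j Hi Hj Hr; apply HR; auto; lia.
Qed.

Lemma pair_cell_ends_determine_pattern d p ab w w' :
  In p (Pi (S d)) -> In (fst ab) (Pi d) -> In (snd ab) (Pi d) ->
  pair_cell val T d ab w -> pair_cell val T d ab w' -> (ends_ordered val T d w <-> ends_ordered val T d w') ->
  P (S d) p w -> P (S d) p w'.
Proof.
  intros Hp Ha Hb Q1 Q2 HA H; apply (has_pattern_of_above _ (x d w)); auto; intros i j Hi Hj Hr.
  destruct (le_lt_dec i d), (le_lt_dec j d).
  - apply (pair_cell_above_init d ab w); auto.
  - destruct i as [| i]; [replace j with (S d) in * by lia; apply HA; auto |].
    apply (pair_cell_above_tail d ab w); auto; lia.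
  - destruct j as [| j].
    + replace i with (S d) in * by lia.
      destruct (above_total (x d w') (S d) 0) as [E | E]; auto.
      exfalso; apply HA in E; apply (above_asym _ _ _ Hr E).
    + apply (pair_cell_above_tail d ab w); auto; lia.
  - replace j with i in Hr by lia; exfalso; apply (above_irrefl _ _ Hr).
Qed.

(* A middle position between the ends would fix their order throughout the cell. *)
Lemma pair_cell_split_ends_adjacent d ab w1 w2 w : In (fst ab) (Pi d) -> In (snd ab) (Pi d) ->
  pair_cell val T d ab w1 -> ends_ordered val T d w1 ->
  pair_cell val T d ab w2 -> ~ ends_ordered val T d w2 ->
  pair_cell val T d ab w -> ends_adjacent val T d w.
Proof.
  intros Ha Hb Q1 A1 Q2 A2 Q i Hi [[H1 H2] | [H1 H2]].
  - apply A2, (above_trans _ _ i).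
    + apply (pair_cell_above_init d ab w); auto; lia.
    + apply (pair_cell_above_tail d ab w); auto; lia.
  - apply (above_asym _ _ _ A1), (above_trans _ _ i).
    + apply (pair_cell_above_tail d ab w); auto; lia.
    + apply (pair_cell_above_init d ab w); auto; lia.
Qed.

Lemma pair_cell_disjoint d ab ab' w : In ab (list_prod (Pi d) (Pi d)) -> In ab' (list_prod (Pi d) (Pi d)) ->
  ab <> ab' -> pair_cell val T d ab w -> pair_cell val T d ab' w -> False.
Proof.
  destruct ab as [a b], ab' as [a' b']; rewrite !in_prod_iff; simpl.
  intros [Ha Hb] [Ha' Hb'] Hne [A1 A2] [B1 B2]; apply Hne.
  rewrite (pattern_unique d (orbit_values val T d w) a a'),
    (pattern_unique d (orbit_values val T d (T w)) b b'); auto.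
Qed.

Section Measurability.

Context {F : (X -> Prop) -> Prop}.
Hypotheses (HF : is_sigma_algebra F) (HT : measurable_map F T) (Hval : measurable_fun F val).

Lemma measurable_orbit_values n k : measurable_fun F (fun w => orbit_values val T n w k).
Proof. apply measurable_fun_iter; auto. Qed.

Lemma sa_above n i j : F (fun w => above (orbit_values val T n w) i j).
Proof.
  apply sa_or; auto; [apply sa_lt; auto; apply measurable_orbit_values |].
  apply sa_and; auto; [apply sa_eq; auto; apply measurable_orbit_values | apply sa_const; auto].
Qed.

Lemma sa_pattern n p : F (P n p).
Proof.
  apply (sa_ext (fun w => forall l, (1 <= l <= n)%nat ->
           above (orbit_values val T n w) (nth (l - 1) p 0%nat) (nth l p 0%nat))).
  - apply sa_forall_if; auto; intro; apply sa_above.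
  - intro; unfold P, P_pat; rewrite has_pattern_iff_above; tauto.
Qed.

Lemma pattern_partition n : partition F (Pi n) (P n).
Proof.
  split; [apply Pi_NoDup | apply sa_pattern | |].
  - intros p p' w Hp Hp' Hne H H'; apply Hne; apply (pattern_unique n (orbit_values val T n w)); auto.
  - intro w; apply pattern_exists.
Qed.

Lemma pair_partition d : partition F (list_prod (Pi d) (Pi d)) (pair_cell val T d).
Proof.
  split; [apply NoDup_list_prod; apply Pi_NoDup | | apply pair_cell_disjoint |].
  - intros [a b]; apply sa_and; auto; [apply sa_pattern | apply (HT (P d b)), sa_pattern].
  - intro w; destruct (pattern_exists d (orbit_values val T d w)) as [a [Ha A]].
    destruct (pattern_exists d (orbit_values val T d (T w))) as [b [Hb B]].
    exists (a, b); split; [apply in_prod; auto | split; auto].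
Qed.

Lemma sa_ends_adjacent d : F (ends_adjacent val T d).
Proof.
  apply sa_forall_if; auto; intro i; apply sa_compl; auto.
  apply sa_or; auto; apply sa_and; auto; apply sa_above.
Qed.

Lemma ordinal_entropy_gap {mu : (X -> Prop) -> R} d : is_prob_measure F mu ->
  0 <= H_ord mu val T (S d) - H_ord2 mu val T d <= ln 2 * mu (ends_adjacent val T d).
Proof.
  intro Hmu; unfold H_ord2.
  rewrite (Rsum_flat_map_prod (fun a b => eta (mu (fun w => P d a w /\ P d b (T w))))).
  apply (entropy_refinement_gap HF Hmu _ _ _ _ (ends_ordered val T d)); auto.
  - apply pattern_partition.
  - apply pair_partition.
  - apply sa_above.
  - apply sa_ends_adjacent.
  - intros p [a b] w w' Hp Hab; apply in_prod_iff in Hab; apply pattern_refines_pair_cell; tauto.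
  - intros p [a b] w w' Hp Hab; apply in_prod_iff in Hab;
      apply pair_cell_ends_determine_pattern; tauto.
  - intros [a b] w1 w2 w Hab; apply in_prod_iff in Hab;
      apply pair_cell_split_ends_adjacent; tauto.
Qed.

End Measurability.
End OrdinalPartition.

(** * Strong mixing and the ends-adjacent sets *)

Definition avoids {X : Type} (T : X -> X) (J : X -> Prop) (d : nat) (w : X) : Prop :=
  forall j, (1 <= j <= d)%nat -> ~ J (iterT j T w).

Section Mixing.

Context {X : Type} {F : (X -> Prop) -> Prop} {mu : (X -> Prop) -> R} (T : X -> X).
Hypotheses (HF : is_sigma_algebra F) (Hmu : is_prob_measure F mu) (HT : measurable_map F T).
Hypothesis Hmix : strong_mixing F mu T.

Lemma sa_avoids J d : F J -> F (avoids T J d).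
Proof.
  intro HJ; apply sa_forall_if; auto; intro j; apply sa_compl; auto; apply sa_preimage_iter; auto.
Qed.

(* The orbit of almost every point enters a set of positive measure: by mixing,
   [mu (T^-n J /\ avoids J forever) -> mu J * mu (avoids J forever)], while the left side vanishes. *)
Lemma mu_avoids_cv_0 J : F J -> 0 < mu J -> Un_cv (fun d => mu (avoids T J d)) 0.
Proof.
  intros HJ Hpos.
  set (Ainf := fun x => forall d, avoids T J d x).
  assert (HAi : F Ainf) by (apply sa_forall; auto; intro; apply sa_avoids; auto).
  pose proof (mu_decreasing_inter HF Hmu (avoids T J) (fun d => sa_avoids J d HJ)
                (fun n x Hx j Hj => Hx j ltac:(lia))) as H.
  assert (Z : mu Ainf = 0).
  { assert (H0 : Un_cv (fun n => mu (fun x => J (iterT n T x) /\ Ainf x)) 0).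
    { apply (Un_cv_eventually_0 _ 1); intros n Hn; apply (mu_null HF Hmu).
      intros x [H1 H2]; apply (H2 n n); auto; lia. }
    pose proof (UL_sequence _ _ _ (Hmix J Ainf HJ HAi) H0) as E.
    assert (0 <= mu Ainf) by (apply (mu_nonneg Hmu); auto); nra. }
  fold Ainf in H; rewrite Z in H; exact H.
Qed.

Section Atom.

Variable val : X -> R.
Hypotheses (Hval : measurable_fun F val) (Hinj : forall w w', val w = val w' -> w = w').
Hypothesis Hpres : measure_preserving F mu T.

Lemma iterT_fixed p n : T p = p -> iterT n T p = p.
Proof. intro E; induction n; simpl; congruence. Qed.

(* Mixing gives [mu {p} ^ 2 = lim mu (T^-n {p} /\ {p})], and each term is [0] or [mu {p}]. *)
Lemma atom_full_fixed_point t : 0 < mu (fun w => val w = t) ->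
  exists p, T p = p /\ mu (fun w => w <> p) = 0.
Proof.
  intro Hpos; set (A := fun w => val w = t) in *.
  assert (HA : F A) by (apply sa_eq; auto; apply measurable_fun_const; auto).
  destruct (mu_pos_inhabited HF Hmu A Hpos) as [p Hp].
  assert (Asing : forall w, A w <-> w = p)
    by (intro w; split; [intro; apply Hinj; unfold A in *; congruence | intros ->; auto]).
  assert (Hfull : mu A = 1).
  { destruct (Un_cv_two_valued _ _ (mu A) (Hmix A A HA HA)) as [E | E].
    - intro n; destruct (classic (A (iterT n T p))) as [Y | Y].
      + right; apply mu_ext; intro x; rewrite !Asing; split; [tauto | intros ->; rewrite <- Asing; auto].
      + left; apply (mu_null HF Hmu); intros x [H1 H2]; apply Asing in H2; subst; auto.
    - nra.
    - assert (mu A * (mu A - 1) = 0) by lra; apply Rmult_integral in H; lra. }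
  assert (HnA : F (fun w => w <> p))
    by (apply (sa_ext (fun w => ~ A w)); [apply sa_compl; auto | intro; rewrite Asing; tauto]).
  assert (Hnot : mu (fun w => w <> p) = 0)
    by (rewrite (mu_ext mu _ (fun w => ~ A w)), (mu_compl HF Hmu); auto; [lra | intro; rewrite Asing; tauto]).
  exists p; split; auto; apply NNPP; intro N.
  assert (Hle : mu (preimage T A) <= mu (fun w => w <> p)).
  { apply (mu_mono HF Hmu); [apply (HT A HA) | exact HnA |].
    intros x Hx ->; apply N, Asing, Hx. }
  rewrite (Hpres A HA) in Hle; lra.
Qed.

Lemma ends_adjacent_cv_0_atom t : 0 < mu (fun w => val w = t) ->
  Un_cv (fun d => mu (ends_adjacent val T d)) 0.
Proof.
  intro Hpos; destruct (atom_full_fixed_point t Hpos) as [p [Tp Hp]].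
  apply (Un_cv_eventually_0 _ 1); intros d Hd; apply Rle_antisym;
    [rewrite <- Hp | apply (mu_nonneg Hmu), sa_ends_adjacent; auto].
  apply (mu_mono HF Hmu).
  - apply sa_ends_adjacent; auto.
  - apply (sa_ext (fun w => ~ (val w = val p))).
    + apply sa_compl, sa_eq; auto; apply measurable_fun_const; auto.
    + intro w; split; [intros H ->; auto | intros H E; apply H, Hinj, E].
  - intros w Hw ->; apply (Hw 1%nat); [lia |].
    right; unfold above, orbit_values; rewrite !iterT_fixed by auto; split; right; split; auto; lia.
Qed.

End Atom.
End Mixing.

(** * Quantile bins of a non-atomic distribution *)

Section Quantiles.

Context {X : Type} {F : (X -> Prop) -> Prop} (mu : (X -> Prop) -> R) (val : X -> R).
Hypotheses (HF : is_sigma_algebra F) (Hmu : is_prob_measure F mu) (Hval : measurable_fun F val).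
Hypothesis Hnoatom : forall t, mu (fun w => val w = t) = 0.

Definition cdf (t : R) : R := mu (fun w => val w <= t).

Let Hle t : F (fun w => val w <= t) := sa_le_const HF val t Hval.

Lemma cdf_mono s t : s <= t -> cdf s <= cdf t.
Proof. intro H; apply (mu_mono HF Hmu); auto; intros w Hw; lra. Qed.

Lemma cdf_small eps : eps > 0 -> exists t, cdf t < eps.
Proof.
  intro He; pose proof (mu_decreasing_inter HF Hmu (fun n w => val w <= - INR n) (fun n => Hle _)) as H.
  rewrite (mu_null HF Hmu) in H.
  2:{ intros x Hx; destruct (INR_unbounded (- val x)) as [n Hn]; specialize (Hx n); lra. }
  destruct (H ltac:(intros n x Hx; rewrite S_INR in Hx; lra) eps He) as [N HN].
  exists (- INR N); specialize (HN N (le_n _)); unfold Rdist in HN; apply Rabs_def2 in HN; unfold cdf; lra.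
Qed.

Lemma cdf_large eps : eps > 0 -> exists t, cdf t > 1 - eps.
Proof.
  intro He; pose proof (mu_increasing_union HF Hmu (fun n w => val w <= INR n) (fun n => Hle _)) as H.
  rewrite (mu_ext mu _ (fun _ => True)), (mu_full Hmu) in H.
  2:{ intro x; split; auto; intros _; destruct (INR_unbounded (val x)) as [n Hn]; exists n; lra. }
  destruct (H ltac:(intros n x Hx; rewrite S_INR; lra) eps He) as [N HN].
  exists (INR N); specialize (HN N (le_n _)); unfold Rdist in HN; apply Rabs_def2 in HN; unfold cdf; lra.
Qed.

Lemma cdf_right_cont t eps : eps > 0 -> exists delta, delta > 0 /\ cdf (t + delta) < cdf t + eps.
Proof.
  intro He.
  pose proof (mu_decreasing_inter HF Hmu (fun n w => val w <= t + / INR (S n)) (fun n => Hle _)) as H.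
  rewrite (mu_ext mu _ (fun w => val w <= t)) in H.
  2:{ intro x; split.
      - intro Hx; apply Rnot_lt_le; intro Hl; destruct (inv_INR_S_small (val x - t)) as [n Hn]; [lra |].
        specialize (Hx n); lra.
      - intros Hx n; pose proof (inv_INR_S_pos n); lra. }
  destruct (H ltac:(intros n x Hx; pose proof (inv_INR_S_decr n); lra) eps He) as [N HN].
  exists (/ INR (S N)); split; [apply inv_INR_S_pos |].
  specialize (HN N (le_n _)); unfold Rdist in HN; apply Rabs_def2 in HN; unfold cdf; lra.
Qed.

Lemma cdf_left_cont t eps : eps > 0 -> exists delta, delta > 0 /\ cdf (t - delta) > cdf t - eps.
Proof.
  intro He.
  pose proof (mu_increasing_union HF Hmu (fun n w => val w <= t - / INR (S n)) (fun n => Hle _)) as H.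
  rewrite (mu_ext mu _ (fun w => val w < t)) in H.
  2:{ intro x; split.
      - intros [n Hn]; pose proof (inv_INR_S_pos n); lra.
      - intro Hx; destruct (inv_INR_S_small (t - val x)) as [n Hn]; [lra | exists n; lra]. }
  assert (E : mu (fun w => val w < t) = cdf t).
  { unfold cdf; rewrite (mu_split HF Hmu (fun w => val w <= t) (fun w => val w < t)); auto.
    rewrite (mu_ext mu (fun w => val w <= t /\ ~ val w < t) (fun w => val w = t)), Hnoatom
      by (intro; lra).
    rewrite (mu_ext mu (fun w => val w <= t /\ val w < t) (fun w => val w < t)) by (intro; lra); ring. }
  rewrite E in H; destruct (H ltac:(intros n x Hx; pose proof (inv_INR_S_decr n); lra) eps He) as [N HN].
  exists (/ INR (S N)); split; [apply inv_INR_S_pos |].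
  specialize (HN N (le_n _)); unfold Rdist in HN; apply Rabs_def2 in HN; unfold cdf in *; lra.
Qed.

Lemma cdf_continuous : continuity cdf.
Proof.
  intros t eps He; simpl; unfold Rdist, D_x, no_cond.
  destruct (cdf_right_cont t eps He) as [d1 [Hd1 H1]], (cdf_left_cont t eps He) as [d2 [Hd2 H2]].
  exists (Rmin d1 d2); split; [apply Rmin_glb_lt; lra |].
  intros y [_ Hy]; apply Rabs_def2 in Hy; pose proof (Rmin_l d1 d2); pose proof (Rmin_r d1 d2).
  assert (cdf (t - d2) <= cdf y) by (apply cdf_mono; lra).
  assert (cdf y <= cdf (t + d1)) by (apply cdf_mono; lra).
  apply Rabs_def1; lra.
Qed.

Lemma cdf_surjective c : 0 < c < 1 -> exists t, cdf t = c.
Proof.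
  intro Hc; destruct (cdf_small c ltac:(lra)) as [x Hx], (cdf_large (1 - c) ltac:(lra)) as [y Hy].
  assert (x < y) by (apply Rnot_le_lt; intro; assert (cdf y <= cdf x) by (apply cdf_mono; auto); lra).
  destruct (IVT (fun t => cdf t - c) x y) as [z [_ Hz]]; auto; [| lra | lra | exists z; lra].
  apply continuity_minus; [apply cdf_continuous | apply continuity_const; intros a b; auto].
Qed.

(* [bin m c k] is the interval [(c k, c (k+1)]], the first and last bins being unbounded. *)
Definition bin (m : nat) (c : nat -> R) (k : nat) (w : X) : Prop :=
  (k = 0%nat \/ c k < val w) /\ (k = (m - 1)%nat \/ val w <= c (S k)).

Definition quantiles (m : nat) (c : nat -> R) : Prop :=
  forall k, (1 <= k <= m - 1)%nat -> cdf (c k) = INR k / INR m.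

Lemma quantiles_exist m : (2 <= m)%nat -> exists c, quantiles m c.
Proof.
  intro Hm; assert (Hmpos : 0 < INR m) by (apply lt_0_INR; lia).
  assert (Hq : forall k, exists z, (1 <= k <= m - 1)%nat -> cdf z = INR k / INR m).
  { intro k; destruct (le_lt_dec 1 k); [destruct (le_lt_dec k (m - 1)) |]; try (exists 0; intro; lia).
    assert (1 <= INR k) by (apply (le_INR 1); lia); assert (INR k < INR m) by (apply lt_INR; lia).
    destruct (cdf_surjective (INR k / INR m)) as [z Hz]; [| exists z; auto].
    split; [apply Rdiv_lt_0_compat; lra | apply (Rmult_lt_reg_r (INR m)); auto].
    unfold Rdiv; rewrite Rmult_assoc, Rinv_l; lra. }
  destruct (functional_choice _ Hq) as [c Hc]; exists c; exact Hc.
Qed.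

Section Bins.

Variables (m : nat) (c : nat -> R).
Hypotheses (Hm : (2 <= m)%nat) (Hc : quantiles m c).

Lemma quantiles_le i j : (1 <= i)%nat -> (i <= j)%nat -> (j <= m - 1)%nat -> c i <= c j.
Proof.
  intros Hi Hij Hj; apply Rnot_lt_le; intro Hl; destruct (Nat.eq_dec i j) as [-> | Hne]; [lra |].
  assert (H : cdf (c j) <= cdf (c i)) by (apply cdf_mono; lra).
  rewrite !Hc in H by lia; assert (0 < INR m) by (apply lt_0_INR; lia).
  apply Rmult_le_reg_r, INR_le in H; [lia | apply Rinv_0_lt_compat; auto].
Qed.

Lemma sa_bin k : F (bin m c k).
Proof. apply sa_and; auto; apply sa_or; auto; try apply sa_const; auto; apply sa_gt_const; auto. Qed.

Lemma mu_bin k : (k < m)%nat -> mu (bin m c k) = / INR m.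
Proof.
  intro Hk; assert (Hmpos : 0 < INR m) by (apply lt_0_INR; lia).
  set (Lo := fun w => k = 0%nat \/ c k < val w); set (Up := fun w => k = (m - 1)%nat \/ val w <= c (S k)).
  assert (HL : F Lo) by (apply sa_or; auto; [apply sa_const | apply sa_gt_const]; auto).
  assert (HU : F Up) by (apply sa_or; auto; apply sa_const; auto).
  assert (MU : mu Up = INR (S k) / INR m).
  { destruct (Nat.eq_dec k (m - 1)) as [E | E].
    - rewrite (mu_ext mu Up (fun _ => True)), (mu_full Hmu) by (intro; unfold Up; tauto).
      replace (S k) with m by lia; field; lra.
    - rewrite (mu_ext mu Up (fun w => val w <= c (S k))) by (intro; unfold Up; tauto); apply Hc; lia. }
  assert (ML : mu (fun w => ~ Lo w) = INR k / INR m).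
  { destruct (Nat.eq_dec k 0) as [-> | E].
    - rewrite (mu_null HF Hmu) by (intro; unfold Lo; tauto); simpl; field; lra.
    - rewrite (mu_ext mu _ (fun w => val w <= c k)); [apply Hc; lia |].
      intro w; unfold Lo; split; [intro H; apply Rnot_lt_le; tauto | intros H [H' | H']; lia || lra]. }
  assert (Hsub : forall w, ~ Lo w -> Up w).
  { intros w Hw; unfold Up; destruct (Nat.eq_dec k (m - 1)); auto; right.
    unfold Lo in Hw; pose proof (quantiles_le k (S k) ltac:(lia) ltac:(lia) ltac:(lia)).
    assert (~ c k < val w) by tauto; lra. }
  rewrite (mu_split HF Hmu Up Lo) in MU by auto.
  rewrite (mu_ext mu (fun x => Up x /\ ~ Lo x) (fun x => ~ Lo x)), ML, S_INR in MU
    by (intro x; split; [tauto | intro; split; auto]).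
  unfold bin; rewrite (mu_ext mu _ (fun x => Up x /\ Lo x)) by (intro; unfold Up, Lo; tauto).
  apply (Rplus_eq_reg_r (INR k / INR m)); rewrite MU; field; lra.
Qed.

Lemma bin_cover w : exists k, (k < m)%nat /\ bin m c k w.
Proof.
  assert (H : forall n j, (m - 1 - j)%nat = n -> (j < m)%nat -> (j = 0%nat \/ c j < val w) ->
            exists k, (k < m)%nat /\ bin m c k w).
  { induction n; intros j Hn Hj HL; [exists j; split; auto; split; auto; left; lia |].
    destruct (Rle_lt_dec (val w) (c (S j))); [exists j; split; auto; split; auto |].
    apply (IHn (S j)); auto; lia. }
  apply (H (m - 1)%nat 0%nat); auto; lia.
Qed.

Lemma bin_between a b w1 w2 y : (a + 2 <= b)%nat -> (b < m)%nat ->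
  bin m c a w1 -> bin m c b w2 -> bin m c (S a) y -> val w1 < val y /\ val y < val w2.
Proof.
  intros Hab Hb [_ [A1 | A1]] [[B1 | B1] _] [[Y1 | Y1] [Y2 | Y2]]; try lia.
  pose proof (quantiles_le (S (S a)) b ltac:(lia) ltac:(lia) ltac:(lia)); lra.
Qed.

End Bins.
End Quantiles.

Section NonAtomic.

Context {X : Type} {F : (X -> Prop) -> Prop} {mu : (X -> Prop) -> R} (T : X -> X) (val : X -> R).
Hypotheses (HF : is_sigma_algebra F) (Hmu : is_prob_measure F mu) (HT : measurable_map F T).
Hypotheses (Hmix : strong_mixing F mu T) (Hval : measurable_fun F val).
Hypothesis Hnoatom : forall t, mu (fun w => val w = t) = 0.

Section Bins.

Variables (m : nat) (c : nat -> R).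
Hypotheses (Hm : (2 <= m)%nat) (Hc : quantiles mu val m c).

Let Hbin := sa_bin val HF Hval m c.

Definition near_bin (a : nat) (w : X) : Prop :=
  exists b, (b < m)%nat /\ (a <= S b)%nat /\ (b <= S a)%nat /\ bin val m c b w.

Lemma sa_near_bin a : F (near_bin a).
Proof.
  apply (sa_exists_lt HF (fun b w => (a <= S b)%nat /\ (b <= S a)%nat /\ bin val m c b w)); intro b.
  apply sa_and; auto; [apply sa_const | apply sa_and; auto; apply sa_const]; auto.
Qed.

Lemma mu_near_bin_le a : mu (near_bin a) <= 3 / INR m.
Proof.
  set (B k w := (k < m)%nat /\ bin val m c k w).
  assert (HB : forall k, F (B k)) by (intro; apply sa_and; auto; apply sa_const; auto).
  assert (MB : forall k, mu (B k) <= / INR m).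
  { intro k; destruct (le_lt_dec m k).
    - rewrite (mu_null HF Hmu) by (intros x [Hx _]; lia); apply Rlt_le, Rinv_0_lt_compat, lt_0_INR; lia.
    - rewrite <- (mu_bin mu val HF Hmu Hval m c Hm Hc k); auto.
      apply (mu_mono HF Hmu); auto; intros x [_ Hx]; exact Hx. }
  assert (Hsub : mu (near_bin a) <= mu (fun x => B (pred a) x \/ (B a x \/ B (S a) x))).
  { apply (mu_mono HF Hmu); [apply sa_near_bin | repeat apply sa_or; auto |].
    intros x [b [Hb [H1 [H2 Hx]]]]; unfold B.
    assert (b = pred a \/ b = a \/ b = S a) as [-> | [-> | ->]] by lia; auto. }
  pose proof (mu_union_le HF Hmu (B (pred a)) _ (HB _) (sa_or HF _ _ (HB a) (HB (S a)))).
  pose proof (mu_union_le HF Hmu (B a) (B (S a)) (HB _) (HB _)).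
  pose proof (MB (pred a)); pose proof (MB a); pose proof (MB (S a)); unfold Rdiv; lra.
Qed.

(* If [w] and [T^(d+1) w] lie two or more bins apart, every orbit point in the bin just above the
   lower one separates them; so a point with adjacent ends has close ends or skips a whole bin. *)
Lemma ends_adjacent_near_or_avoids d w : ends_adjacent val T d w ->
  (exists a, (a < m)%nat /\ near_bin a (iterT (S d) T w) /\ bin val m c a w) \/
  (exists e, (e < m)%nat /\ avoids T (bin val m c e) d w).
Proof.
  intro Hw.
  destruct (bin_cover val m c Hm w) as [a [Ha Ba]].
  destruct (bin_cover val m c Hm (iterT (S d) T w)) as [b [Hb Bb]].
  assert (Hpos : forall j, (1 <= j <= d)%nat -> orbit_values val T (S d) w (S d - j) = val (iterT j T w))
    by (intros j Hj; unfold orbit_values; do 3 f_equal; lia).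
  assert (Hend : orbit_values val T (S d) w (S d) = val w)
    by (unfold orbit_values; rewrite Nat.sub_diag; reflexivity).
  assert (Hstart : orbit_values val T (S d) w 0 = val (iterT (S d) T w)) by reflexivity.
  destruct (le_lt_dec (a + 2) b) as [Hab | Hab]; [| destruct (le_lt_dec (b + 2) a) as [Hba | Hba]].
  - right; exists (S a); split; [lia |]; intros j Hj Bj.
    destruct (bin_between mu val HF Hmu Hval m c Hm Hc a b _ _ _ Hab Hb Ba Bb Bj).
    apply (Hw (S d - j)%nat ltac:(lia)); left; unfold above; rewrite Hpos, Hend, Hstart by lia.
    split; left; lra.
  - right; exists (S b); split; [lia |]; intros j Hj Bj.
    destruct (bin_between mu val HF Hmu Hval m c Hm Hc b a _ _ _ Hba Ha Bb Ba Bj).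
    apply (Hw (S d - j)%nat ltac:(lia)); right; unfold above; rewrite Hpos, Hend, Hstart by lia.
    split; left; lra.
  - left; exists a; split; [| split]; auto; exists b; split; [| split; [| split]]; auto; lia.
Qed.

Definition adjacent_bound (d : nat) : R :=
  Rsum_list (map (fun a => mu (fun w => near_bin a (iterT (S d) T w) /\ bin val m c a w)) (seq 0 m)) +
  Rsum_list (map (fun e => mu (avoids T (bin val m c e) d)) (seq 0 m)).

Lemma mu_ends_adjacent_le d : mu (ends_adjacent val T d) <= adjacent_bound d.
Proof.
  assert (HN : forall a, F (fun w => near_bin a (iterT (S d) T w) /\ bin val m c a w))
    by (intro a; apply sa_and; auto; apply sa_preimage_iter; auto; apply sa_near_bin).
  assert (HA : forall e, F (avoids T (bin val m c e) d)) by (intro; apply sa_avoids; auto).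
  set (Near w := exists a, (a < m)%nat /\ near_bin a (iterT (S d) T w) /\ bin val m c a w).
  set (Skip w := exists e, (e < m)%nat /\ avoids T (bin val m c e) d w).
  assert (HNear : F Near) by (apply sa_exists_lt; auto).
  assert (HSkip : F Skip) by (apply sa_exists_lt; auto).
  apply (Rle_trans _ (mu (fun w => Near w \/ Skip w))).
  - apply (mu_mono HF Hmu); [apply sa_ends_adjacent | apply sa_or |]; auto.
    apply ends_adjacent_near_or_avoids.
  - eapply Rle_trans; [apply (mu_union_le HF Hmu); auto |].
    apply Rplus_le_compat; apply (mu_finite_union_le HF Hmu); auto.
Qed.

Lemma adjacent_bound_cv : exists L, L <= 3 / INR m /\ Un_cv adjacent_bound L.
Proof.
  assert (Hmpos : 0 < INR m) by (apply lt_0_INR; lia).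
  assert (MB : forall a, In a (seq 0 m) -> mu (bin val m c a) = / INR m)
    by (intros a Ha; apply in_seq in Ha; apply (mu_bin mu val HF Hmu Hval m c Hm Hc); lia).
  exists (Rsum_list (map (fun a => mu (near_bin a) * mu (bin val m c a)) (seq 0 m)) +
          Rsum_list (map (fun _ => 0) (seq 0 m))); split.
  - rewrite (Rsum_const 0), Rmult_0_r, Rplus_0_r.
    eapply Rle_trans; [apply (Rsum_le _ (fun _ => 3 / INR m * / INR m)) |].
    + intros a Ha; rewrite MB by auto; apply Rmult_le_compat_r; [apply Rlt_le, Rinv_0_lt_compat; lra |].
      apply mu_near_bin_le.
    + rewrite Rsum_const, length_seq; right; field; lra.
  - apply CV_plus; apply Un_cv_Rsum; intros a Ha.
    + apply (Un_cv_S (fun n => mu (fun w => near_bin a (iterT n T w) /\ bin val m c a w))), Hmix;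
        [apply sa_near_bin | auto].
    + apply (mu_avoids_cv_0 T HF Hmu HT Hmix); auto; rewrite MB by auto; apply Rinv_0_lt_compat; lra.
Qed.

End Bins.

Lemma ends_adjacent_cv_0_nonatomic : Un_cv (fun d => mu (ends_adjacent val T d)) 0.
Proof.
  intros eps He.
  destruct (inv_INR_S_small (eps / 6)) as [n0 Hn0]; [lra |].
  assert (Hm : (2 <= S (S n0))%nat) by lia.
  destruct (quantiles_exist mu val HF Hmu Hval Hnoatom _ Hm) as [c Hc].
  destruct (adjacent_bound_cv _ c Hm Hc) as [L [HL Hcv]].
  assert (3 / INR (S (S n0)) < eps / 2) by (pose proof (inv_INR_S_decr n0); unfold Rdiv; lra).
  destruct (Hcv (eps / 2) ltac:(lra)) as [N HN]; exists N; intros d Hd; specialize (HN d Hd).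
  pose proof (mu_ends_adjacent_le _ c Hm Hc d).
  assert (0 <= mu (ends_adjacent val T d)) by (apply (mu_nonneg Hmu), sa_ends_adjacent; auto).
  unfold Rdist in *; apply Rabs_def2 in HN; rewrite Rminus_0_r, Rabs_right; lra.
Qed.

End NonAtomic.

Lemma ends_adjacent_cv_0 {X : Type} {F : (X -> Prop) -> Prop} {mu : (X -> Prop) -> R}
  (T : X -> X) (val : X -> R) :
  is_sigma_algebra F -> is_prob_measure F mu -> measurable_map F T ->
  measure_preserving F mu T -> strong_mixing F mu T ->
  measurable_fun F val -> (forall w w', val w = val w' -> w = w') ->
  Un_cv (fun d => mu (ends_adjacent val T d)) 0.
Proof.
  intros HF Hmu HT Hpres Hmix Hval Hinj.
  destruct (classic (exists t, 0 < mu (fun w => val w = t))) as [[t Ht] | Hnoatom].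
  - exact (ends_adjacent_cv_0_atom T HF Hmu HT Hmix val Hval Hinj Hpres t Ht).
  - apply (ends_adjacent_cv_0_nonatomic T val HF Hmu HT Hmix Hval); intro t; apply Rle_antisym.
    + apply Rnot_lt_le; intro; apply Hnoatom; eauto.
    + apply (mu_nonneg Hmu), sa_eq; auto; apply measurable_fun_const; auto.
Qed.

Lemma Borel_sigma_algebra I : is_sigma_algebra (Borel I).
Proof.
  split; [| split].
  - intros G HG _; apply (sa_full HG).
  - intros A HA G HG HO; apply (sa_compl HG), HA; auto.
  - intros A HA G HG HO; apply (sa_exists HG); intro n; apply HA; auto.
Qed.

Lemma measurable_proj1_sig I : measurable_fun (Borel I) (@proj1_sig R I).
Proof.
  intros c G HG HO; apply HO; intros [x Hx] Hc; cbv beta in *; simpl in *.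
  exists (c - x); split; [lra |].
  intros [y Hy] Hd; simpl in Hd; apply Rabs_def2 in Hd; simpl; lra.
Qed.

Lemma proj1_sig_inj I (w w' : Omega I) : proj1_sig w = proj1_sig w' -> w = w'.
Proof. destruct w, w'; simpl; intros ->; f_equal; apply proof_irrelevance. Qed.

Theorem corollary2 (I : R -> Prop) (mu : (Omega I -> Prop) -> R)
  (T : Omega I -> Omega I) :
  is_interval I ->
  is_prob_measure (Borel I) mu ->
  measurable_map (Borel I) T ->
  measure_preserving (Borel I) mu T ->
  strong_mixing (Borel I) mu T ->
  Un_cv (fun d => h_sort mu (@proj1_sig R I) T d - h_cond mu (@proj1_sig R I) T d) 0.
Proof.
  intros _ Hmu HT Hpres Hmix.
  pose proof (Borel_sigma_algebra I) as HF; pose proof (measurable_proj1_sig I) as Hval.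
  apply (Un_cv_squeeze_0 _ (fun d => mu (ends_adjacent (@proj1_sig R I) T d)) (ln 2)).
  - intro d; unfold h_sort, h_cond.
    replace (_ - _ - _) with (H_ord mu (@proj1_sig R I) T (S d) - H_ord2 mu (@proj1_sig R I) T d) by ring.
    apply (ordinal_entropy_gap _ _ HF HT Hval d Hmu).
  - exact (ends_adjacent_cv_0 T _ HF Hmu HT Hpres Hmix Hval (proj1_sig_inj I)).
Qed.
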